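(* Fix $p\in[1,\infty)$, $q\in[1,\infty]$, integers $k\ge0$, $m_1\ge1$, $d_1,\dots,d_k\ge1$, and $c,c_o>0$; let $\mathbf d=(m_1,d_1,\dots,d_k,1)$ and $\beta=[\frac1{p^*}-\frac1q]_+$. Then for every set $S=\{x_1,\dots,x_n\}\subseteq[-1,1]^{m_1}$: (a) if $p\in(1,2]$, $$\widehat{\mathfrak{R}}_S\big(\mathcal{N}^{k,\mathbf d}_{p,q,c,c_o}\big)\le c_o\sqrt{\tfrac{(k+1)\log16}{n}}\sum_{i=1}^{k+1}c^{k-i+1}\prod_{l=i}^k d_l^{\beta}+\frac{c_oc^k}{\sqrt n}\prod_{i=1}^kd_i^{\beta}\,m_1^{1/p^*}\Big[\min\big(\sqrt{p^*-1},\sqrt{2\log(2m_1)}\big)+\sqrt{(k+1)\log16}\Big];$$ (b) if $p=1$ or $p\in(2,\infty)$, $$\widehat{\mathfrak{R}}_S\big(\mathcal{N}^{k,\mathbf d}_{p,q,c,c_o}\big)\le c_o\sqrt{\tfrac{(k+1)\log16}{n}}\sum_{i=1}^{k+1}c^{k-i+1}\prod_{l=i}^k d_l^{\beta}+\frac{c_oc^k}{\sqrt n}\prod_{i=1}^kd_i^{\beta}\,m_1^{1/p^*}\Big(\sqrt{2\log(2m_1)}+\sqrt{(k+1)\log16}\Big).$$ (Empty products equal $1$.)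
   Context: $p^*\in(1,\infty]$ is defined by $1/p+1/p^*=1$ ($p^*=\infty$, $1/p^*=0$ when $p=1$); $[x]_+=\max(x,0)$. $\sigma(u)=\max(u,0)$, applied coordinatewise. For a real $s_1\times s_2$ matrix $A=(a_{ij})$: $\|A\|_{p,q}=\big(\sum_{j=1}^{s_2}(\sum_{i=1}^{s_1}|a_{ij}|^p)^{q/p}\big)^{1/q}$ for $q<\infty$, and $\|A\|_{p,\infty}=\max_j(\sum_{i}|a_{ij}|^p)^{1/p}$. An affine map $T:\mathbb{R}^{a}\to\mathbb{R}^{b}$, $T(u)=W^Tu+B$, is identified with $\tilde V\in\mathbb{R}^{(a+1)\times b}$ whose first row is $B^T$ and remaining rows form $W$, so $T(u)=\tilde V^T(1,u^T)^T$; $\|T\|_{p,q}:=\|\tilde V\|_{p,q}$. For $k\ge0$, width vector $\mathbf d=(d_0,\dots,d_{k+1})$ and $c,c_o>0$, $\mathcal{N}^{k,\mathbf d}_{p,q,c,c_o}$ is the set of all $f=T_{k+1}\circ\sigma\circ T_k\circ\cdots\circ\sigma\circ T_1:\mathbb{R}^{d_0}\to\mathbb{R}^{d_{k+1}}$ with affine $T_i:\mathbb{R}^{d_{i-1}}\to\mathbb{R}^{d_i}$, $\|T_i\|_{p,q}=c$ for $i\le k$ and $\|T_{k+1}\|_{p,q}\le c_o$. The empirical Rademacher complexity is $\widehat{\mathfrak{R}}_S(\mathcal F)=\mathbb{E}_\epsilon\big[\sup_{f\in\mathcal F}\frac1n\sum_{i=1}^n\epsilon_i f(x_i)\big]$ with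 $\epsilon_i$ i.i.d. uniform on $\{-1,+1\}$. *)

From Stdlib Require Import Reals Lra Lia List ClassicalEpsilon.
Open Scope R_scope.

Fixpoint rsum (n : nat) (f : nat -> R) : R :=
  match n with O => 0 | S n' => rsum n' f + f n' end.
Fixpoint rprod (n : nat) (f : nat -> R) : R :=
  match n with O => 1 | S n' => rprod n' f * f n' end.
Fixpoint rmaxl (n : nat) (f : nat -> R) : R :=
  match n with O => 0 | S n' => Rmax (rmaxl n' f) (f n') end.

(* real power x^y for x > 0; set to 0 for x <= 0 (only used on
   nonnegative bases, where 0^y = 0 for y > 0) *)
Definition rpow (x y : R) : R :=
  if Rle_dec x 0 then 0 else Rpower x y.

(* q in [1, infinity]: None stands for q = infinity *)
Definition extR := option R.
Definition inv_ext (q : extR) : R :=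
  match q with Some q' => 1 / q' | None => 0 end.

Definition inv_pstar (p : R) : R := 1 - 1 / p.
Definition pstar (p : R) : R := p / (p - 1).

Definition pos_part (x : R) : R := Rmax x 0.
Definition relu (u : nat -> R) : nat -> R := fun i => Rmax (u i) 0.

(* A matrix is nat -> nat -> R; only entries (i,j) with i < s1, j < s2 matter. *)
Definition col_norm (p : R) (s1 : nat) (A : nat -> nat -> R) (j : nat) : R :=
  rpow (rsum s1 (fun i => rpow (Rabs (A i j)) p)) (1 / p).

Definition mat_norm (p : R) (q : extR) (s1 s2 : nat) (A : nat -> nat -> R) : R :=
  match q with
  | Some q' => rpow (rsum s2 (fun j => rpow (col_norm p s1 A j) q')) (1 / q')
  | None => rmaxl s2 (col_norm p s1 A)
  end.

(* affine map R^a -> R^b identified with V in R^{(a+1) x b}: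
   T(u)_j = V 0 j + sum_{i<a} V (i+1) j * u_i *)
Definition affine (a : nat) (V : nat -> nat -> R) (u : nat -> R) : nat -> R :=
  fun j => V 0%nat j + rsum a (fun i => V (S i) j * u i).

(* width vector d = (m1, dh 1, ..., dh k, 1) *)
Definition width (k m1 : nat) (dh : nat -> nat) (i : nat) : nat :=
  if Nat.eqb i 0 then m1 else if Nat.leb i k then dh i else 1%nat.

Fixpoint hidden (k m1 : nat) (dh : nat -> nat) (W : nat -> nat -> nat -> R)
  (x : nat -> R) (i : nat) : nat -> R :=
  match i with
  | O => x
  | S i' => relu (affine (width k m1 dh i') (W i) (hidden k m1 dh W x i'))
  end.

Definition net_out (k m1 : nat) (dh : nat -> nat) (W : nat -> nat -> nat -> R)
  (x : nat -> R) : R :=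
  affine (width k m1 dh k) (W (S k)) (hidden k m1 dh W x k) 0%nat.

Definition in_NN (p : R) (q : extR) (c co : R) (k m1 : nat) (dh : nat -> nat)
  (f : (nat -> R) -> R) : Prop :=
  exists W : nat -> nat -> nat -> R,
    (forall i, (1 <= i <= k)%nat ->
       mat_norm p q (S (width k m1 dh (i - 1))) (width k m1 dh i) (W i) = c) /\
    mat_norm p q (S (width k m1 dh k)) 1 (W (S k)) <= co /\
    (forall x, f x = net_out k m1 dh W x).

(* supremum of a set of reals (least upper bound when the set is nonempty
   and bounded above; 0 otherwise) *)
Definition Rsup (E : R -> Prop) : R :=
  match excluded_middle_informative (bound E /\ exists x, E x) with
  | left H => proj1_sig (completeness E (proj1 H) (proj2 H))
  | right _ => 0
  end.

Fixpoint sign_vectors (n : nat) : list (nat -> R) :=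
  match n with
  | O => (fun _ => 1) :: nil
  | S n' => flat_map (fun e =>
        (fun i => if Nat.eqb i n' then 1 else e i) ::
        (fun i => if Nat.eqb i n' then -1 else e i) :: nil) (sign_vectors n')
  end.

Definition lsum (l : list R) : R := fold_right Rplus 0 l.

Definition emp_rademacher (F : ((nat -> R) -> R) -> Prop) (n : nat)
  (x : nat -> nat -> R) : R :=
  / (2 ^ n) * lsum (map (fun eps =>
      Rsup (fun r => exists f, F f /\
              r = / INR n * rsum n (fun i => eps i * f (x i))))
    (sign_vectors n)).

(* The network class is peeled one layer at a time, working with exponential
   moments E exp(mu * sup ...) rather than with expectations.  A layer with
   affine weights of (p,q)-norm c maps a unit-lp readout of the next layer to
   c * d^beta times a unit-lp readout of the current layer (Hoelder), plus the
   bias term |sum_i eps_i|; the ReLU is removed by a contraction inequality for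
   exponential moments of suprema, at the price of a factor 2 per layer.  Since
   every peeled quantity is a function of the signs with bounded differences, it
   concentrates around its mean, so after optimising mu the k+1 factors 2
   only cost an additive sqrt(2 (k+1) log 2 / n) per unit of scale.  What remains is the Rademacher complexity of
   the unit lp ball on the inputs, m1^(1/p^* ) times E max_t |sum_i eps_i x_it|,
   bounded by Massart's lemma (any p) or, for 1 < p <= 2, by a p^*-th moment
   bound via Hoelder. *)

From Stdlib Require Import Reals Lra Lia List ClassicalEpsilon.
From Stdlib Require Import FunctionalExtensionality PropExtensionality.
Open Scope R_scope.

Lemma rsum_ext n f g : (forall i, (i < n)%nat -> f i = g i) -> rsum n f = rsum n g.
Proof.
  induction n; simpl; intros H; auto.
  rewrite IHn by (intros; apply H; lia). rewrite H by lia. reflexivity.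
Qed.

Lemma rsum_le n f g : (forall i, (i < n)%nat -> f i <= g i) -> rsum n f <= rsum n g.
Proof.
  induction n; simpl; intros H; [lra|].
  assert (f n <= g n) by (apply H; lia).
  assert (rsum n f <= rsum n g) by (apply IHn; intros; apply H; lia). lra.
Qed.

Lemma rsum_zero n : rsum n (fun _ => 0) = 0.
Proof. induction n; simpl; [reflexivity|]. rewrite IHn; lra. Qed.

Lemma rsum_nonneg n f : (forall i, (i < n)%nat -> 0 <= f i) -> 0 <= rsum n f.
Proof. intros H. rewrite <- (rsum_zero n). apply rsum_le; auto. Qed.

Lemma rsum_plus n f g : rsum n (fun i => f i + g i) = rsum n f + rsum n g.
Proof. induction n; simpl; [lra|]. rewrite IHn; lra. Qed.

Lemma rsum_scal n a f : rsum n (fun i => a * f i) = a * rsum n f.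
Proof. induction n; simpl; [lra|]. rewrite IHn; lra. Qed.

Lemma rsum_opp n f : rsum n (fun i => - f i) = - rsum n f.
Proof. induction n; simpl; [lra|]. rewrite IHn; lra. Qed.

Lemma rsum_minus n f g : rsum n (fun i => f i - g i) = rsum n f - rsum n g.
Proof. unfold Rminus. rewrite rsum_plus, rsum_opp. reflexivity. Qed.

Lemma rsum_const n a : rsum n (fun _ => a) = INR n * a.
Proof. induction n; [simpl; lra|]. simpl rsum. rewrite IHn, S_INR. lra. Qed.

Lemma rsum_shift n f : rsum (S n) f = f 0%nat + rsum n (fun i => f (S i)).
Proof. induction n; simpl in *; [lra|]. rewrite IHn; lra. Qed.

Lemma rsum_swap n m (f : nat -> nat -> R) :
  rsum n (fun i => rsum m (fun j => f i j)) = rsum m (fun j => rsum n (fun i => f i j)).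
Proof. induction n; simpl; [now rewrite rsum_zero|]. rewrite IHn, <- rsum_plus. reflexivity. Qed.

Lemma Rabs_le_inv a b : Rabs a <= b -> - b <= a <= b.
Proof. unfold Rabs. destruct (Rcase_abs a); lra. Qed.

Lemma Rabs_rsum_le n f : Rabs (rsum n f) <= rsum n (fun i => Rabs (f i)).
Proof.
  induction n; simpl; [rewrite Rabs_R0; lra|].
  eapply Rle_trans; [apply Rabs_triang|]. lra.
Qed.

Lemma rsum_ge_term n f j :
  (forall i, (i < n)%nat -> 0 <= f i) -> (j < n)%nat -> f j <= rsum n f.
Proof.
  induction n; intros H Hj; [lia|]. simpl.
  assert (0 <= f n) by (apply H; lia).
  destruct (Nat.eq_dec j n) as [->|].
  - assert (0 <= rsum n f) by (apply rsum_nonneg; intros; apply H; lia). lra.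
  - assert (f j <= rsum n f) by (apply IHn; [intros; apply H|]; lia). lra.
Qed.

Lemma rsum_single n f s :
  (s < n)%nat -> (forall i, (i < n)%nat -> i <> s -> f i = 0) -> rsum n f = f s.
Proof.
  induction n; intros Hs H; [lia|]. simpl. destruct (Nat.eq_dec s n) as [->|].
  - rewrite (rsum_ext n f (fun _ => 0)), rsum_zero by (intros; apply H; lia). lra.
  - rewrite IHn, (H n) by (auto; lia). lra.
Qed.

Lemma rprod_nonneg m f : (forall t, 0 <= f t) -> 0 <= rprod m f.
Proof. intros H. induction m; simpl; [lra|]. apply Rmult_le_pos; auto. Qed.

Lemma rmaxl_ge_term m f j : (j < m)%nat -> f j <= rmaxl m f.
Proof.
  induction m; intros Hj; [lia|]. simpl. destruct (Nat.eq_dec j m) as [->|].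
  - apply Rmax_r.
  - eapply Rle_trans; [apply IHm; lia|apply Rmax_l].
Qed.

Lemma rmaxl_nonneg m f : 0 <= rmaxl m f.
Proof. induction m; simpl; [lra|]. eapply Rle_trans; [apply IHm|apply Rmax_l]. Qed.

Lemma rmaxl_single m f :
  (1 <= m)%nat -> 0 <= f 0%nat -> (forall j, (1 <= j)%nat -> f j = 0) -> rmaxl m f = f 0%nat.
Proof.
  intros Hm H0 H. induction m; [lia|]. destruct m; simpl.
  - apply Rmax_right; auto.
  - simpl in IHm. rewrite IHm, (H (S m)) by lia. apply Rmax_left; auto.
Qed.

Lemma exp_le_exp a b : a <= b -> exp a <= exp b.
Proof. intros [H|H]; [left; apply exp_increasing; lra|subst; lra]. Qed.

Lemma ln_le_minus1 z : 0 < z -> ln z <= z - 1.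
Proof. intros Hz. assert (H := exp_ineq1_le (ln z)). rewrite exp_ln in H by auto. lra. Qed.

Lemma rpow_nonneg x a : 0 <= rpow x a.
Proof. unfold rpow. destruct (Rle_dec x 0); [lra|]. left; apply exp_pos. Qed.

Lemma rpow_Rpower x a : 0 < x -> rpow x a = Rpower x a.
Proof. intros. unfold rpow. destruct (Rle_dec x 0); [lra|reflexivity]. Qed.

Lemma rpow_gt0 x a : 0 < x -> 0 < rpow x a.
Proof. intros. rewrite rpow_Rpower by auto. apply exp_pos. Qed.

Lemma rpow_0_l a : rpow 0 a = 0.
Proof. unfold rpow. destruct (Rle_dec 0 0); lra. Qed.

Lemma rpow_1_l a : rpow 1 a = 1.
Proof. rewrite rpow_Rpower by lra. unfold Rpower. rewrite ln_1, Rmult_0_r, exp_0. reflexivity. Qed.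

Lemma rpow_0_r x : 0 < x -> rpow x 0 = 1.
Proof. intros. rewrite rpow_Rpower by auto. apply Rpower_O; auto. Qed.

Lemma rpow_rpow x a b : 0 <= x -> rpow (rpow x a) b = rpow x (a * b).
Proof.
  intros Hx. destruct (Req_dec x 0) as [->|]; [now rewrite !rpow_0_l|].
  rewrite (rpow_Rpower x), !rpow_Rpower by (try apply exp_pos; lra).
  apply Rpower_mult.
Qed.

Lemma rpow_rpow_inv x p : 0 <= x -> 0 < p -> rpow (rpow x p) (1 / p) = x.
Proof.
  intros Hx Hp. rewrite rpow_rpow by auto. replace (p * (1 / p)) with 1 by (field; lra).
  destruct (Req_dec x 0) as [->|]; [apply rpow_0_l|].
  rewrite rpow_Rpower by lra. apply Rpower_1; lra.
Qed.

Lemma rpow_inv_rpow x p : 0 <= x -> 0 < p -> rpow (rpow x (1 / p)) p = x.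
Proof.
  intros Hx Hp. rewrite rpow_rpow by auto. replace (1 / p * p) with 1 by (field; lra).
  destruct (Req_dec x 0) as [->|]; [apply rpow_0_l|].
  rewrite rpow_Rpower by lra. apply Rpower_1; lra.
Qed.

Lemma rpow_mult_distr x y a : 0 <= x -> 0 <= y -> rpow (x * y) a = rpow x a * rpow y a.
Proof.
  intros Hx Hy.
  destruct (Req_dec x 0) as [->|]; [rewrite Rmult_0_l, !rpow_0_l; lra|].
  destruct (Req_dec y 0) as [->|]; [rewrite Rmult_0_r, !rpow_0_l; lra|].
  rewrite !rpow_Rpower by nra. symmetry; apply Rpower_mult_distr; lra.
Qed.

Lemma rpow_inv_l x a : 0 < x -> rpow (/ x) a * rpow x a = 1.
Proof.
  intros. rewrite <- rpow_mult_distr by (left; try apply Rinv_0_lt_compat; auto).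
  rewrite Rinv_l by lra. apply rpow_1_l.
Qed.

Lemma rpow_le_compat_l x y a : 0 <= a -> 0 <= x <= y -> rpow x a <= rpow y a.
Proof.
  intros Ha Hxy. destruct (Req_dec x 0) as [->|]; [rewrite rpow_0_l; apply rpow_nonneg|].
  rewrite !rpow_Rpower by lra. apply Rle_Rpower_l; lra.
Qed.

Lemma rpow_le_reg_l x y a : 0 < a -> 0 <= x -> 0 <= y -> rpow x a <= rpow y a -> x <= y.
Proof.
  intros Ha Hx Hy H. destruct (Rle_dec x y); auto. exfalso.
  assert (rpow y a < rpow x a); [|lra].
  destruct (Req_dec y 0) as [->|]; [rewrite rpow_0_l; apply rpow_gt0; lra|].
  rewrite !rpow_Rpower by lra. apply Rlt_Rpower_l; lra.
Qed.

Lemma rpow_le1_antimono x a b : 0 <= x <= 1 -> 0 <= a <= b -> rpow x b <= rpow x a.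
Proof.
  intros Hx Hab. destruct (Req_dec x 0) as [->|]; [rewrite !rpow_0_l; lra|].
  rewrite !rpow_Rpower by lra.
  assert (ln x <= 0) by (assert (Hl := ln_le_minus1 x); lra).
  unfold Rpower. apply exp_le_exp. nra.
Qed.

Lemma Rabs_le1_of_rpow p y : 1 <= p -> rpow (Rabs y) p <= 1 -> Rabs y <= 1.
Proof.
  intros Hp H. apply (rpow_le_reg_l _ _ p); try lra; try apply Rabs_pos.
  now rewrite rpow_1_l.
Qed.

(** * Weighted AM-GM and Hoelder-type bounds *)

Lemma ln_le_affine x M : 0 < x -> 0 < M -> ln x <= ln M + x / M - 1.
Proof.
  intros Hx HM. assert (H := ln_le_minus1 (x / M) ltac:(apply Rdiv_lt_0_compat; auto)).
  unfold Rdiv in *. rewrite ln_mult, ln_Rinv in H by (auto; apply Rinv_0_lt_compat; auto). lra.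
Qed.

Lemma weighted_amgm2 x y a b : 0 <= x -> 0 <= y -> 0 <= a -> 0 <= b -> a + b = 1 ->
  rpow x a * rpow y b <= a * x + b * y.
Proof.
  intros Hx Hy Ha Hb Hab.
  destruct (Req_dec x 0) as [->|]; [rewrite rpow_0_l; nra|].
  destruct (Req_dec y 0) as [->|]; [rewrite rpow_0_l; nra|].
  rewrite !rpow_Rpower by lra. unfold Rpower. rewrite <- exp_plus.
  set (M := a * x + b * y). assert (HM : 0 < M) by (unfold M; destruct (Rle_dec x y); nra).
  assert (h1 := ln_le_affine x M ltac:(lra) HM). assert (h2 := ln_le_affine y M ltac:(lra) HM).
  assert (a * (x / M) + b * (y / M) = 1) by (unfold M in *; field; lra).
  rewrite <- (exp_ln M) by auto. apply exp_le_exp.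
  replace (ln M) with (a * ln M + b * ln M) by (rewrite <- Rmult_plus_distr_r, Hab; ring).
  nra.
Qed.

Lemma weighted_amgm3 x y z a b c :
  0 <= x -> 0 <= y -> 0 <= z -> 0 <= a -> 0 <= b -> 0 <= c -> a + b + c = 1 ->
  rpow x a * rpow y b * rpow z c <= a * x + b * y + c * z.
Proof.
  intros Hx Hy Hz Ha Hb Hc Habc.
  assert (0 <= rpow y b) by apply rpow_nonneg.
  destruct (Req_dec x 0) as [->|]; [rewrite rpow_0_l; nra|].
  destruct (Req_dec y 0) as [->|]; [rewrite rpow_0_l; nra|].
  destruct (Req_dec z 0) as [->|]; [rewrite rpow_0_l; nra|].
  rewrite !rpow_Rpower by lra. unfold Rpower. rewrite <- !exp_plus.
  set (M := a * x + b * y + c * z).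
  assert (HM : 0 < M)
    by (unfold M; destruct (Rle_dec x y); destruct (Rle_dec x z); destruct (Rle_dec y z); nra).
  assert (h1 := ln_le_affine x M ltac:(lra) HM). assert (h2 := ln_le_affine y M ltac:(lra) HM).
  assert (h3 := ln_le_affine z M ltac:(lra) HM).
  assert (a * (x / M) + b * (y / M) + c * (z / M) = 1) by (unfold M in *; field; lra).
  rewrite <- (exp_ln M) by auto. apply exp_le_exp.
  replace (ln M) with (a * ln M + b * ln M + c * ln M)
    by (rewrite <- !Rmult_plus_distr_r, Habc; ring).
  nra.
Qed.

Lemma inv_ge1_bounds p : 1 <= p -> 0 < 1 / p <= 1.
Proof.
  intros Hp. unfold Rdiv. rewrite Rmult_1_l.
  split; [apply Rinv_0_lt_compat; lra|rewrite <- Rinv_1; apply Rinv_le_contravar; lra].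
Qed.

Lemma rsum_le_width_pow d rho f : (1 <= d)%nat ->
  rsum d (fun j => f j * rpow (/ INR d) rho) <= 1 -> rsum d f <= rpow (INR d) rho.
Proof.
  intros Hd H. assert (HD : 0 < INR d) by (apply lt_0_INR; lia).
  assert (Hr := rpow_inv_l (INR d) rho HD).
  assert (0 <= rpow (INR d) rho) by apply rpow_nonneg.
  rewrite (rsum_ext d _ (fun j => rpow (/ INR d) rho * f j)), rsum_scal in H by (intros; ring).
  apply Rmult_le_compat_r with (r := rpow (INR d) rho) in H; [|auto].
  replace (rpow (/ INR d) rho * rsum d f * rpow (INR d) rho) with
    (rsum d f * (rpow (/ INR d) rho * rpow (INR d) rho)) in H by ring.
  rewrite Hr in H. lra.
Qed.

Lemma lp_unit_l1_le p d u : 1 <= p -> (1 <= d)%nat ->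
  rsum d (fun j => rpow (Rabs (u j)) p) <= 1 ->
  rsum d (fun j => Rabs (u j)) <= rpow (INR d) (1 - 1 / p).
Proof.
  intros Hp Hd Hu. assert (HD : 0 < INR d) by (apply lt_0_INR; lia).
  assert (Hp1 := inv_ge1_bounds p Hp).
  apply rsum_le_width_pow; auto.
  apply Rle_trans with (rsum d (fun j => 1 / p * rpow (Rabs (u j)) p + (1 - 1 / p) * / INR d)).
  - apply rsum_le. intros j Hj. rewrite <- (rpow_rpow_inv (Rabs (u j)) p) at 1 by (try apply Rabs_pos; lra).
    apply weighted_amgm2; try apply rpow_nonneg; try lra. left; apply Rinv_0_lt_compat; auto.
  - rewrite rsum_plus, rsum_scal, rsum_const.
    replace (INR d * ((1 - 1 / p) * / INR d)) with (1 - 1 / p) by (field; lra).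
    assert (1 / p * rsum d (fun j => rpow (Rabs (u j)) p) <= 1 / p) by nra.
    lra.
Qed.

Lemma holder_unit_le_width_pow p q d u y : 1 <= p -> 1 <= q -> (1 <= d)%nat ->
  0 <= 1 - 1 / p - 1 / q ->
  rsum d (fun j => rpow (Rabs (u j)) p) <= 1 ->
  (forall j, (j < d)%nat -> 0 <= y j) -> rsum d (fun j => rpow (y j) q) <= 1 ->
  rsum d (fun j => Rabs (u j) * y j) <= rpow (INR d) (1 - 1 / p - 1 / q).
Proof.
  intros Hp Hq Hd Hrho Hu Hy0 Hy. assert (HD : 0 < INR d) by (apply lt_0_INR; lia).
  assert (Hp1 := inv_ge1_bounds p Hp). assert (Hq1 := inv_ge1_bounds q Hq).
  set (rho := 1 - 1 / p - 1 / q) in *.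
  apply rsum_le_width_pow; auto.
  apply Rle_trans with
    (rsum d (fun j => 1 / p * rpow (Rabs (u j)) p + 1 / q * rpow (y j) q + rho * / INR d)).
  - apply rsum_le. intros j Hj.
    rewrite <- (rpow_rpow_inv (Rabs (u j)) p) at 1 by (try apply Rabs_pos; lra).
    rewrite <- (rpow_rpow_inv (y j) q) at 1 by (auto; lra).
    apply weighted_amgm3; try apply rpow_nonneg; try lra.
    left; apply Rinv_0_lt_compat; auto. unfold rho; lra.
  - rewrite !rsum_plus, !rsum_scal, rsum_const, Rinv_r, Rmult_1_r by lra. unfold rho. nra.
Qed.

Lemma holder_unit_le1 p q d u y : 1 <= p -> 1 <= q -> 1 - 1 / p - 1 / q < 0 ->
  rsum d (fun j => rpow (Rabs (u j)) p) <= 1 ->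
  (forall j, (j < d)%nat -> 0 <= y j) -> rsum d (fun j => rpow (y j) q) <= 1 ->
  rsum d (fun j => Rabs (u j) * y j) <= 1.
Proof.
  intros Hp Hq Hrho Hu Hy0 Hy. assert (Hp1 := inv_ge1_bounds p Hp).
  apply Rle_trans with (rsum d (fun j => 1 / p * rpow (Rabs (u j)) p + (1 - 1 / p) * rpow (y j) q)).
  - apply rsum_le. intros j Hj.
    assert (Hyj : rpow (y j) q <= 1).
    { eapply Rle_trans; [|apply Hy].
      apply (rsum_ge_term d (fun j => rpow (y j) q)); auto. intros; apply rpow_nonneg. }
    (* since 1 - 1/p < 1/q, y = (y^q)^(1/q) <= (y^q)^(1 - 1/p) as y^q <= 1 *)
    assert (Hyj2 : y j <= rpow (rpow (y j) q) (1 - 1 / p)).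
    { rewrite <- (rpow_rpow_inv (y j) q) at 1 by (auto; lra). apply rpow_le1_antimono.
      split; [apply rpow_nonneg|auto]. lra. }
    apply Rle_trans with (Rabs (u j) * rpow (rpow (y j) q) (1 - 1 / p)).
    + apply Rmult_le_compat_l; auto; apply Rabs_pos.
    + rewrite <- (rpow_rpow_inv (Rabs (u j)) p) at 1 by (try apply Rabs_pos; lra).
      apply weighted_amgm2; try apply rpow_nonneg; lra.
  - rewrite rsum_plus, !rsum_scal. nra.
Qed.

Definition ext_ge1 (q : extR) : Prop :=
  match q with Some q' => 1 <= q' | None => True end.

(* ||N||_q <= c, stated without the 1/q-th root *)
Definition lq_bounded (q : extR) (d : nat) (N : nat -> R) (c : R) : Prop :=
  match q with
  | Some q' => rsum d (fun j => rpow (N j) q') <= rpow c q'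
  | None => forall j, (j < d)%nat -> N j <= c
  end.

Lemma holder_width_bound p q d u N c : 1 <= p -> ext_ge1 q -> (1 <= d)%nat -> 0 < c ->
  rsum d (fun j => rpow (Rabs (u j)) p) <= 1 ->
  (forall j, (j < d)%nat -> 0 <= N j) -> lq_bounded q d N c ->
  rsum d (fun j => Rabs (u j) * N j) <= c * rpow (INR d) (pos_part (inv_pstar p - inv_ext q)).
Proof.
  intros Hp Hq Hd Hc Hu HN HB. assert (HD : 0 < INR d) by (apply lt_0_INR; lia).
  unfold inv_pstar, inv_ext, pos_part. destruct q as [q'|]; simpl in Hq, HB.
  - set (y := fun j => N j / c).
    assert (Hy0 : forall j, (j < d)%nat -> 0 <= y j)
      by (intros; unfold y, Rdiv; apply Rmult_le_pos; [auto|left; apply Rinv_0_lt_compat; auto]).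
    assert (Hy : rsum d (fun j => rpow (y j) q') <= 1).
    { rewrite (rsum_ext d _ (fun j => rpow (/ c) q' * rpow (N j) q')), rsum_scal.
      - rewrite <- (rpow_inv_l c q') by auto.
        apply Rmult_le_compat_l; [apply rpow_nonneg|auto].
      - intros j Hj. unfold y, Rdiv. rewrite Rmult_comm, rpow_mult_distr; auto.
        left; apply Rinv_0_lt_compat; auto. }
    rewrite (rsum_ext d _ (fun j => c * (Rabs (u j) * y j))), rsum_scal
      by (intros; unfold y; field; lra).
    apply Rmult_le_compat_l; [lra|].
    destruct (Rle_dec 0 (1 - 1 / p - 1 / q')).
    + rewrite Rmax_left by lra. apply holder_unit_le_width_pow; auto.
    + rewrite Rmax_right, rpow_0_r by lra. apply (holder_unit_le1 p q'); auto. lra.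
  - rewrite Rmax_left, Rminus_0_r by (assert (H := inv_ge1_bounds p Hp); lra).
    apply Rle_trans with (rsum d (fun j => c * Rabs (u j))).
    + apply rsum_le. intros. rewrite Rmult_comm. apply Rmult_le_compat_r; [apply Rabs_pos|auto].
    + rewrite rsum_scal. apply Rmult_le_compat_l; [lra|]. apply lp_unit_l1_le; auto.
Qed.

(** * Averages over random signs *)

(* [Erad n F] is the expectation of F over eps uniform in {-1,1}^n, written exactly
   as the average in [emp_rademacher]. *)
Definition Erad (n : nat) (F : (nat -> R) -> R) : R :=
  / (2 ^ n) * lsum (map F (sign_vectors n)).

Definition upd (e : nat -> R) (n : nat) (a : R) : nat -> R :=
  fun i => if Nat.eqb i n then a else e i.

Definition is_sign (e : nat -> R) : Prop := forall i, e i = 1 \/ e i = -1.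

Lemma Erad_0 F : Erad 0 F = F (fun _ => 1).
Proof. unfold Erad. simpl. lra. Qed.

Lemma Erad_S n F : Erad (S n) F = Erad n (fun e => (F (upd e n 1) + F (upd e n (-1))) / 2).
Proof.
  unfold Erad, upd. simpl sign_vectors. simpl pow. rewrite Rinv_mult.
  induction (sign_vectors n) as [|e l IH]; simpl in *; lra.
Qed.

Lemma is_sign_upd e n a : is_sign e -> (a = 1 \/ a = -1) -> is_sign (upd e n a).
Proof. intros H Ha i. unfold upd. destruct (Nat.eqb i n); auto. Qed.

Lemma Rabs_sign e s : is_sign e -> Rabs (e s) = 1.
Proof. intros H. destruct (H s) as [->| ->]; [apply Rabs_R1|]. rewrite Rabs_left; lra. Qed.

Lemma upd_lt e n a s : (s < n)%nat -> upd e n a s = e s.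
Proof. intros. unfold upd. destruct (Nat.eqb_spec s n); [lia|auto]. Qed.

Lemma rsum_upd n e a f :
  rsum (S n) (fun s => upd e n a s * f s) = rsum n (fun s => e s * f s) + a * f n.
Proof.
  simpl. unfold upd at 2. rewrite Nat.eqb_refl. f_equal.
  apply rsum_ext. intros; rewrite upd_lt; auto.
Qed.

Lemma Erad_mono n F G : (forall e, is_sign e -> F e <= G e) -> Erad n F <= Erad n G.
Proof.
  revert F G. induction n; intros F G H.
  - rewrite !Erad_0. apply H. intros i; auto.
  - rewrite !Erad_S. apply IHn. intros e He.
    assert (F (upd e n 1) <= G (upd e n 1)) by (apply H, is_sign_upd; auto).
    assert (F (upd e n (-1)) <= G (upd e n (-1))) by (apply H, is_sign_upd; auto). lra.
Qed.

Lemma Erad_ext n F G : (forall e, is_sign e -> F e = G e) -> Erad n F = Erad n G.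
Proof. intros H. apply Rle_antisym; apply Erad_mono; intros e He; rewrite H; auto; lra. Qed.

Lemma Erad_const n a : Erad n (fun _ => a) = a.
Proof.
  induction n; [apply Erad_0|]. rewrite Erad_S, <- IHn at 1.
  apply Erad_ext; intros; lra.
Qed.

Lemma Erad_plus n F G : Erad n (fun e => F e + G e) = Erad n F + Erad n G.
Proof.
  revert F G. induction n; intros F G; [now rewrite !Erad_0|].
  rewrite !Erad_S, <- IHn. apply Erad_ext; intros; lra.
Qed.

Lemma Erad_scal n a F : Erad n (fun e => a * F e) = a * Erad n F.
Proof.
  revert F. induction n; intros F; [now rewrite !Erad_0|].
  rewrite !Erad_S, <- IHn. apply Erad_ext; intros; lra.
Qed.

Lemma Erad_rsum n m (F : nat -> (nat -> R) -> R) :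
  Erad n (fun e => rsum m (fun t => F t e)) = rsum m (fun t => Erad n (F t)).
Proof. induction m; simpl; [apply Erad_const|]. rewrite Erad_plus, IHm. reflexivity. Qed.

Lemma Erad_lin n a : Erad n (fun e => rsum n (fun s => e s * a s)) = 0.
Proof.
  induction n; [now rewrite Erad_0|]. rewrite Erad_S, <- IHn.
  apply Erad_ext. intros e He. rewrite !rsum_upd. lra.
Qed.

Lemma exp_midpoint_le a b : exp ((a + b) / 2) <= (exp a + exp b) / 2.
Proof.
  replace a with (a / 2 + a / 2) at 2 by field. replace b with (b / 2 + b / 2) at 2 by field.
  replace ((a + b) / 2) with (a / 2 + b / 2) by field. rewrite !exp_plus.
  assert (0 <= (exp (a / 2) - exp (b / 2)) ^ 2) by apply pow2_ge_0. nra.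
Qed.

Lemma exp_Erad_le n F : exp (Erad n F) <= Erad n (fun e => exp (F e)).
Proof.
  revert F. induction n; intros F; [rewrite !Erad_0; lra|].
  rewrite !Erad_S. eapply Rle_trans; [apply IHn|].
  apply Erad_mono. intros; apply exp_midpoint_le.
Qed.

Lemma Erad_le_of_exp n F mu B : 0 < mu ->
  Erad n (fun e => exp (mu * F e)) <= B -> Erad n F <= ln B / mu.
Proof.
  intros Hmu H. assert (J := exp_Erad_le n (fun e => mu * F e)). rewrite Erad_scal in J.
  assert (0 < exp (mu * Erad n F)) by apply exp_pos.
  apply Rmult_le_reg_l with mu; auto. replace (mu * (ln B / mu)) with (ln B) by (field; lra).
  rewrite <- (ln_exp (mu * Erad n F)).
  destruct (Req_dec (exp (mu * Erad n F)) B) as [->|]; [lra|].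
  left; apply ln_increasing; lra.
Qed.

(** * Sub-Gaussian sign averages *)

Lemma sinh_nonneg t : 0 <= t -> 0 <= sinh t.
Proof. intros. unfold sinh. assert (exp (- t) <= exp t) by (apply exp_le_exp; lra). lra. Qed.

Lemma sinh_le_mul_cosh t : 0 <= t -> sinh t <= t * cosh t.
Proof.
  intros Ht. destruct (Req_dec t 0) as [->|]; [unfold sinh, cosh; rewrite Ropp_0; lra|].
  assert (D : forall u, 0 <= u <= t ->
            derivable_pt_lim (fun x => x * cosh x - sinh x) u (u * sinh u)).
  { intros u _. replace (u * sinh u) with ((1 * cosh u + u * sinh u) - cosh u) by ring.
    apply derivable_pt_lim_minus; [apply derivable_pt_lim_mult|];
      auto using derivable_pt_lim_id, derivable_pt_lim_cosh, derivable_pt_lim_sinh. }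
  destruct (MVT_cor2 _ _ 0 t ltac:(lra) D) as [u [Hu Hu2]].
  assert (0 <= u * sinh u * (t - 0)) by (apply Rmult_le_pos; [apply Rmult_le_pos|]; try apply sinh_nonneg; lra).
  assert (0 * cosh 0 - sinh 0 = 0) by (unfold sinh; rewrite Ropp_0; lra). lra.
Qed.

(* g(x) = exp(-x^2/2) cosh x is nonincreasing on [0, oo), since g' = exp(-x^2/2)(sinh x - x cosh x). *)
Lemma cosh_le_exp_sq_nonneg t : 0 <= t -> cosh t <= exp (t * t / 2).
Proof.
  intros Ht.
  set (g := fun x => exp (- (x * x / 2)) * cosh x).
  set (g' := fun x => exp (- (x * x / 2)) * (sinh x - x * cosh x)).
  assert (D : forall u, 0 <= u <= t -> derivable_pt_lim g u (g' u)).
  { intros u _. unfold g, g'.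
    replace (exp (- (u * u / 2)) * (sinh u - u * cosh u)) with
      ((exp (- (u * u / 2)) * - ((1 * u + u * 1) * / 2 + u * u * 0)) * cosh u
       + exp (- (u * u / 2)) * sinh u) by field.
    apply (derivable_pt_lim_mult (fun x => exp (- (x * x / 2))) cosh);
      [|apply derivable_pt_lim_cosh].
    apply (derivable_pt_lim_comp (fun x => - (x * x / 2)) exp); [|apply derivable_pt_lim_exp].
    apply derivable_pt_lim_opp. unfold Rdiv.
    apply (derivable_pt_lim_mult (fun x => x * x) (fun _ => / 2));
      [apply (derivable_pt_lim_mult id id); apply derivable_pt_lim_id|apply derivable_pt_lim_const]. }
  destruct (Req_dec t 0) as [->|].
  { unfold cosh. rewrite Ropp_0, Rmult_0_l. unfold Rdiv. rewrite Rmult_0_l, exp_0. lra. }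
  destruct (MVT_cor2 g g' 0 t ltac:(lra) D) as [u [Hu Hu2]].
  assert (g' u <= 0).
  { unfold g'. assert (sinh u <= u * cosh u) by (apply sinh_le_mul_cosh; lra).
    assert (0 < exp (- (u * u / 2))) by apply exp_pos. nra. }
  assert (Hg0 : g 0 = 1).
  { unfold g, cosh. rewrite Ropp_0, Rmult_0_l. unfold Rdiv. rewrite Rmult_0_l, Ropp_0, exp_0. lra. }
  assert (Hgt : g t <= 1) by nra.
  unfold g in Hgt. rewrite exp_Ropp in Hgt.
  assert (0 < exp (t * t / 2)) by apply exp_pos.
  apply Rmult_le_compat_r with (r := exp (t * t / 2)) in Hgt; [|lra].
  replace (/ exp (t * t / 2) * cosh t * exp (t * t / 2)) with (cosh t) in Hgt by (field; lra).
  lra.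
Qed.

Lemma cosh_le_exp_sq a : (exp a + exp (- a)) / 2 <= exp (a * a / 2).
Proof.
  destruct (Rle_dec 0 a); [apply cosh_le_exp_sq_nonneg; auto|].
  replace (a * a) with (- a * - a) by ring.
  assert (H := cosh_le_exp_sq_nonneg (- a) ltac:(lra)). unfold cosh in H.
  rewrite Ropp_involutive in H. lra.
Qed.

Definition bounded_diff (n : nat) (F : (nat -> R) -> R) (c : R) : Prop :=
  forall s, (s < n)%nat -> forall e e', is_sign e -> is_sign e' ->
    (forall i, i <> s -> e i = e' i) -> Rabs (F e - F e') <= c.

Lemma exp_pm_le l G D c : Rabs D <= c / 2 ->
  (exp (l * (G + D)) + exp (l * (G - D))) / 2 <= exp (l * l * (c * c) / 8) * exp (l * G).
Proof.
  intros HD.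
  replace (l * (G + D)) with (l * G + l * D) by ring.
  replace (l * (G - D)) with (l * G + - (l * D)) by ring. rewrite !exp_plus.
  assert (Hc := cosh_le_exp_sq (l * D)).
  assert (D * D <= c * c / 4) by (apply Rabs_le_inv in HD; nra).
  assert (exp (l * D * (l * D) / 2) <= exp (l * l * (c * c) / 8))
    by (apply exp_le_exp; replace (l * D * (l * D) / 2) with (l * l * (D * D) / 2) by field;
        assert (0 <= l * l) by nra; nra).
  assert (0 < exp (l * G)) by apply exp_pos. nra.
Qed.

Lemma bounded_diff_avg n F c : bounded_diff (S n) F c ->
  bounded_diff n (fun e => (F (upd e n 1) + F (upd e n (-1))) / 2) c.
Proof.
  intros HB s Hs e e' He He' Hee.
  assert (Hflip : forall a, (a = 1 \/ a = -1) -> Rabs (F (upd e n a) - F (upd e' n a)) <= c).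
  { intros a Ha. apply (HB s); try lia; try (apply is_sign_upd; auto).
    intros i Hi. unfold upd. destruct (Nat.eqb i n); auto. }
  assert (H1 := Hflip 1 (or_introl eq_refl)). assert (H2 := Hflip (-1) (or_intror eq_refl)).
  apply Rabs_le_inv in H1. apply Rabs_le_inv in H2. apply Rabs_le. lra.
Qed.

Lemma Erad_exp_bounded_diff n : forall F c l, 0 <= c -> bounded_diff n F c ->
  Erad n (fun e => exp (l * (F e - Erad n F))) <= exp (l * l * INR n * (c * c) / 8).
Proof.
  induction n; intros F c l Hc HB.
  - rewrite !Erad_0, Rminus_diag, Rmult_0_r. simpl. replace (l * l * 0 * (c * c) / 8) with 0 by field. lra.
  - set (G := fun e => (F (upd e n 1) + F (upd e n (-1))) / 2).
    rewrite (Erad_S n F), Erad_S. fold G.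
    apply Rle_trans with (Erad n (fun e => exp (l * l * (c * c) / 8) * exp (l * (G e - Erad n G)))).
    + apply Erad_mono. intros e He.
      set (D := (F (upd e n 1) - F (upd e n (-1))) / 2).
      assert (HD : Rabs D <= c / 2).
      { assert (Rabs (F (upd e n 1) - F (upd e n (-1))) <= c).
        { apply (HB n); try lia; try (apply is_sign_upd; auto).
          intros i Hi. unfold upd. destruct (Nat.eqb_spec i n); [lia|auto]. }
        unfold D, Rdiv. rewrite Rabs_mult, Rabs_inv, (Rabs_right 2) by lra. lra. }
      replace (F (upd e n 1) - Erad n G) with (G e - Erad n G + D) by (unfold G, D; field).
      replace (F (upd e n (-1)) - Erad n G) with (G e - Erad n G - D) by (unfold G, D; field).
      apply exp_pm_le; auto.
    + rewrite Erad_scal, S_INR.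
      replace (l * l * (INR n + 1) * (c * c) / 8) with
        (l * l * (c * c) / 8 + l * l * INR n * (c * c) / 8) by field.
      rewrite exp_plus. apply Rmult_le_compat_l; [left; apply exp_pos|].
      apply IHn; auto. apply bounded_diff_avg; auto.
Qed.

Lemma bounded_diff_lin n a : (forall s, (s < n)%nat -> Rabs (a s) <= 1) ->
  bounded_diff n (fun e => rsum n (fun s => e s * a s)) 2.
Proof.
  intros Ha s Hs e e' He He' Hee.
  rewrite <- rsum_minus, (rsum_single n _ s Hs).
  - rewrite <- Rmult_minus_distr_r, Rabs_mult.
    assert (Rabs (e s - e' s) <= 2)
      by (destruct (He s) as [-> | ->]; destruct (He' s) as [-> | ->]; apply Rabs_le; lra).
    assert (Rabs (a s) <= 1) by auto.
    assert (0 <= Rabs (a s)) by apply Rabs_pos. assert (0 <= Rabs (e s - e' s)) by apply Rabs_pos. nra.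
  - intros i Hi Hne. rewrite Hee by auto. ring.
Qed.

Lemma Erad_exp_lin n a l : (forall s, (s < n)%nat -> Rabs (a s) <= 1) ->
  Erad n (fun e => exp (l * rsum n (fun s => e s * a s))) <= exp (l * l * INR n / 2).
Proof.
  intros Ha.
  assert (H := Erad_exp_bounded_diff n _ 2 l ltac:(lra) (bounded_diff_lin n a Ha)).
  rewrite Erad_lin in H. replace (l * l * INR n * (2 * 2) / 8) with (l * l * INR n / 2) in H by field.
  eapply Rle_trans; [|apply H]. apply Erad_mono. intros; rewrite Rminus_0_r; lra.
Qed.

Lemma exp_abs_le l y : exp (l * Rabs y) <= exp (l * y) + exp (- l * y).
Proof.
  assert (0 < exp (l * y)) by apply exp_pos. assert (0 < exp (- l * y)) by apply exp_pos.
  unfold Rabs. destruct (Rcase_abs y); [replace (l * - y) with (- l * y) by ring|]; lra.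
Qed.

Lemma Erad_exp_abs_lin n a l : (forall s, (s < n)%nat -> Rabs (a s) <= 1) ->
  Erad n (fun e => exp (l * Rabs (rsum n (fun s => e s * a s)))) <= 2 * exp (l * l * INR n / 2).
Proof.
  intros Ha. eapply Rle_trans; [apply Erad_mono; intros e _; apply exp_abs_le|].
  rewrite Erad_plus. assert (H1 := Erad_exp_lin n a l Ha). assert (H2 := Erad_exp_lin n a (- l) Ha).
  replace (- l * - l) with (l * l) in H2 by ring. lra.
Qed.

Lemma Erad_exp_abs_sum_le n l :
  Erad n (fun e => exp (l * Rabs (rsum n (fun s => e s)))) <= 2 * exp (l * l * INR n / 2).
Proof.
  rewrite (Erad_ext n _ (fun e => exp (l * Rabs (rsum n (fun s => e s * 1)))))
    by (intros; do 3 f_equal; apply rsum_ext; intros; ring).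
  apply Erad_exp_abs_lin. intros; rewrite Rabs_R1; lra.
Qed.

Lemma exp_convex th a b : 0 <= th <= 1 ->
  exp (th * a + (1 - th) * b) <= th * exp a + (1 - th) * exp b.
Proof.
  intros Ht. set (w := th * a + (1 - th) * b).
  assert (Ha : exp w * (1 + (a - w)) <= exp a).
  { replace a with (w + (a - w)) at 2 by ring. rewrite exp_plus.
    apply Rmult_le_compat_l; [left; apply exp_pos|apply exp_ineq1_le]. }
  assert (Hb : exp w * (1 + (b - w)) <= exp b).
  { replace b with (w + (b - w)) at 2 by ring. rewrite exp_plus.
    apply Rmult_le_compat_l; [left; apply exp_pos|apply exp_ineq1_le]. }
  assert (th * (exp w * (1 + (a - w))) + (1 - th) * (exp w * (1 + (b - w))) = exp w) by (unfold w; ring).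
  nra.
Qed.

Lemma Erad_exp_mix_le n th F U V : 0 <= th <= 1 ->
  (forall e, is_sign e -> F e <= th * U e + (1 - th) * V e) ->
  Erad n (fun e => exp (F e)) <=
  th * Erad n (fun e => exp (U e)) + (1 - th) * Erad n (fun e => exp (V e)).
Proof.
  intros Hth H. rewrite <- !Erad_scal, <- Erad_plus. apply Erad_mono. intros e He.
  eapply Rle_trans; [apply exp_le_exp, H; auto|]. apply exp_convex; auto.
Qed.

(** * Suprema over parametrised classes and contraction *)

Definition sup_over {I : Type} (C : I -> Prop) (f : I -> R) : R :=
  Rsup (fun r => exists th, C th /\ r = f th).

Definition bounded_on {I : Type} (C : I -> Prop) (f : I -> R) : Prop :=
  exists K, forall th, C th -> f th <= K.

Lemma Rsup_is_lub E : bound E -> (exists x, E x) -> is_lub E (Rsup E).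
Proof.
  intros Hb Hn. unfold Rsup.
  destruct (excluded_middle_informative (bound E /\ (exists x, E x))) as [H|H].
  - destruct (completeness E (proj1 H) (proj2 H)) as [m Hm]. exact Hm.
  - exfalso; auto.
Qed.

Lemma Rsup_le E b : (forall r, E r -> r <= b) -> 0 <= b -> Rsup E <= b.
Proof.
  intros H Hb. destruct (classic (bound E /\ exists x, E x)) as [[H1 H2]|H1].
  - apply (Rsup_is_lub E H1 H2). intros r Hr; auto.
  - unfold Rsup. destruct (excluded_middle_informative _); [contradiction|auto].
Qed.

Lemma sup_over_ub {I} (C : I -> Prop) f th : bounded_on C f -> C th -> f th <= sup_over C f.
Proof.
  intros [K HK] Hth. apply (Rsup_is_lub (fun r => exists th, C th /\ r = f th)).
  - exists K. intros r [t [Ct ->]]. auto.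
  - exists (f th), th; auto.
  - exists th; auto.
Qed.

Lemma sup_over_lub {I} (C : I -> Prop) f b :
  (exists th, C th) -> (forall th, C th -> f th <= b) -> sup_over C f <= b.
Proof.
  intros [t0 Ht0] Hb. apply (Rsup_is_lub (fun r => exists th, C th /\ r = f th)).
  - exists b. intros r [t [Ct ->]]. auto.
  - exists (f t0), t0; auto.
  - intros r [t [Ct ->]]. auto.
Qed.

Lemma sup_over_ext {I} (C : I -> Prop) f g :
  (forall th, C th -> f th = g th) -> sup_over C f = sup_over C g.
Proof.
  intros H. unfold sup_over. f_equal. apply functional_extensionality. intros r.
  apply propositional_extensionality.
  split; intros [t [Ct ->]]; exists t; split; auto. symmetry; auto.
Qed.

Lemma Rabs_sup_over_diff {I} (C : I -> Prop) X Y c : (exists th, C th) ->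
  bounded_on C X -> bounded_on C Y ->
  (forall th, C th -> Rabs (X th - Y th) <= c) -> Rabs (sup_over C X - sup_over C Y) <= c.
Proof.
  intros Hn BX BY H.
  assert (sup_over C Y <= sup_over C X + c).
  { apply sup_over_lub; auto. intros th Ct. assert (h := Rabs_le_inv _ _ (H th Ct)).
    assert (X th <= sup_over C X) by (apply sup_over_ub; auto). lra. }
  assert (sup_over C X <= sup_over C Y + c).
  { apply sup_over_lub; auto. intros th Ct. assert (h := Rabs_le_inv _ _ (H th Ct)).
    assert (Y th <= sup_over C Y) by (apply sup_over_ub; auto). lra. }
  apply Rabs_le. lra.
Qed.

Lemma exp_sup_over_le {I} (C : I -> Prop) X mu B : 0 < mu -> (exists th, C th) ->
  (forall th, C th -> exp (mu * X th) <= B) -> exp (mu * sup_over C X) <= B.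
Proof.
  intros Hmu [t0 Ht0] H. assert (HB : 0 < B) by (eapply Rlt_le_trans; [apply exp_pos|apply (H t0 Ht0)]).
  rewrite <- (exp_ln B) by auto. apply exp_le_exp.
  replace (ln B) with (mu * (ln B / mu)) by (field; lra). apply Rmult_le_compat_l; [lra|].
  apply sup_over_lub; [exists t0; auto|]. intros th Ct.
  apply Rmult_le_reg_l with mu; auto. replace (mu * (ln B / mu)) with (ln B) by (field; lra).
  rewrite <- (ln_exp (mu * X th)).
  destruct (Req_dec (exp (mu * X th)) B) as [->|]; [lra|].
  left; apply ln_increasing; [apply exp_pos|]. specialize (H th Ct). lra.
Qed.

Lemma exp_sup_over_pair_le {I} (C : I -> Prop) X Y mu B : 0 < mu -> (exists th, C th) ->
  (forall t1 t2, C t1 -> C t2 -> exp (mu * X t1) + exp (mu * Y t2) <= B) ->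
  exp (mu * sup_over C X) + exp (mu * sup_over C Y) <= B.
Proof.
  intros Hmu Hn H.
  assert (HX : forall t2, C t2 -> exp (mu * sup_over C X) + exp (mu * Y t2) <= B).
  { intros t2 Ct2. enough (exp (mu * sup_over C X) <= B - exp (mu * Y t2)) by lra.
    apply exp_sup_over_le; auto. intros t1 Ct1. specialize (H t1 t2 Ct1 Ct2). lra. }
  enough (exp (mu * sup_over C Y) <= B - exp (mu * sup_over C X)) by lra.
  apply exp_sup_over_le; auto. intros t2 Ct2. specialize (HX t2 Ct2). lra.
Qed.

(* The two-point inequality behind the contraction principle, for the
   1-Lipschitz maps a |-> zeta * max(a, 0) with zeta = 1 or -1.  The factor
   e^(mu A) is controlled through 2 e^(mu A) <= e^(mu (A + a)) + e^(mu (A - a)). *)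
Lemma exp_relu_pair_le zeta mu A1 a1 A2 a2 P M : (zeta = 1 \/ zeta = -1) -> 0 < mu ->
  exp (mu * (A1 + a1)) <= P -> exp (mu * (A1 - a1)) <= M ->
  exp (mu * (A2 + a2)) <= P -> exp (mu * (A2 - a2)) <= M ->
  exp (mu * (A1 + zeta * Rmax a1 0)) + exp (mu * (A2 - zeta * Rmax a2 0)) <= P + M.
Proof.
  intros Hz Hmu.
  assert (Hone : forall A1 a1 A2 a2, exp (mu * (A1 + a1)) <= P -> exp (mu * (A1 - a1)) <= M ->
            exp (mu * (A2 + a2)) <= P -> exp (mu * (A2 - a2)) <= M ->
            exp (mu * (A1 + Rmax a1 0)) + exp (mu * (A2 - Rmax a2 0)) <= P + M).
  { clear A1 a1 A2 a2. intros A1 a1 A2 a2 H1 H2 H3 H4.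
    assert (CV : forall A a, 2 * exp (mu * A) <= exp (mu * (A + a)) + exp (mu * (A - a))).
    { intros A a. assert (H := exp_midpoint_le (mu * (A + a)) (mu * (A - a))).
      replace ((mu * (A + a) + mu * (A - a)) / 2) with (mu * A) in H by field. lra. }
    assert (MO : forall A a, 0 <= a -> exp (mu * (A - a)) <= exp (mu * A) <= exp (mu * (A + a)))
      by (intros; split; apply exp_le_exp; nra).
    assert (C1 := CV A1 a1). assert (C2 := CV A2 a2).
    unfold Rmax. destruct (Rle_dec a1 0); destruct (Rle_dec a2 0);
      rewrite ?Rplus_0_r, ?Rminus_0_r.
    - lra.
    - destruct (MO A2 a2) as [M1 M2]; [lra|].
      destruct (MO A1 (- a1)) as [M3 M4]; [lra|]. replace (A1 + - a1) with (A1 - a1) in M4 by ring. lra.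
    - destruct (MO A2 (- a2)) as [M1 M2]; [lra|]. replace (A2 + - a2) with (A2 - a2) in M2 by ring. lra.
    - lra. }
  destruct Hz as [-> | ->]; intros H1 H2 H3 H4.
  - rewrite !Rmult_1_l. apply Hone; auto.
  - replace (A1 + -1 * Rmax a1 0) with (A1 - Rmax a1 0) by ring.
    replace (A2 - -1 * Rmax a2 0) with (A2 + Rmax a2 0) by ring.
    rewrite Rplus_comm. apply Hone; auto.
Qed.

Lemma bounded_on_of_abs {I} (C : I -> Prop) f K :
  (forall th, C th -> Rabs (f th) <= K) -> bounded_on C f.
Proof. intros H. exists K. intros th Ct. apply (Rabs_le_inv _ _ (H th Ct)). Qed.

Lemma Rabs_relu_le a K : Rabs a <= K -> Rabs (Rmax a 0) <= K.
Proof.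
  intros H. apply Rabs_le_inv in H. apply Rabs_le.
  unfold Rmax. destruct (Rle_dec a 0); lra.
Qed.

Lemma exp_sup_relu_pair_le zeta mu {I} (C : I -> Prop) (B a : I -> R) K :
  (zeta = 1 \/ zeta = -1) -> 0 < mu -> (exists th, C th) ->
  (forall th, C th -> Rabs (B th) <= K /\ Rabs (a th) <= K) ->
  exp (mu * sup_over C (fun th => B th + zeta * Rmax (a th) 0)) +
  exp (mu * sup_over C (fun th => B th - zeta * Rmax (a th) 0)) <=
  exp (mu * sup_over C (fun th => B th + a th)) + exp (mu * sup_over C (fun th => B th - a th)).
Proof.
  intros Hz Hmu Hn HK.
  assert (Hb : forall g : I -> R, (forall th, C th -> Rabs (g th) <= K) ->
                bounded_on C (fun th => B th + g th) /\ bounded_on C (fun th => B th - g th)).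
  { intros g Hg. split; apply (bounded_on_of_abs _ _ (K + K)); intros th Ct;
      destruct (HK th Ct) as [H1 _]; assert (H2 := Hg th Ct);
      [eapply Rle_trans; [apply Rabs_triang|]|eapply Rle_trans; [apply Rabs_triang|];
       rewrite Rabs_Ropp]; lra. }
  destruct (Hb a (fun th Ct => proj2 (HK th Ct))) as [BP BM].
  apply exp_sup_over_pair_le; auto. intros t1 t2 C1 C2.
  apply exp_relu_pair_le; auto;
    apply exp_le_exp, Rmult_le_compat_l; try lra;
    apply (sup_over_ub C (fun th => B th + a th)) || apply (sup_over_ub C (fun th => B th - a th));
    auto.
Qed.

Lemma Rabs_rsum_sign_le n e f K : is_sign e -> (forall s, (s < n)%nat -> Rabs (f s) <= K) ->
  Rabs (rsum n (fun s => e s * f s)) <= INR n * K.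
Proof.
  intros He Hf. eapply Rle_trans; [apply Rabs_rsum_le|]. rewrite <- rsum_const.
  apply rsum_le. intros i Hi. rewrite Rabs_mult, Rabs_sign, Rmult_1_l by auto. auto.
Qed.

Lemma Erad_mid_le n X1 X2 Y1 Y2 : Erad n X1 <= Erad n Y1 -> Erad n X2 <= Erad n Y2 ->
  Erad n (fun e => (X1 e + X2 e) / 2) <= Erad n (fun e => (Y1 e + Y2 e) / 2).
Proof.
  intros H1 H2.
  rewrite (Erad_ext n _ (fun e => / 2 * X1 e + / 2 * X2 e)),
    (Erad_ext n (fun e => (Y1 e + Y2 e) / 2) (fun e => / 2 * Y1 e + / 2 * Y2 e)) by (intros; field).
  rewrite !Erad_plus, !Erad_scal. lra.
Qed.

Lemma exp_sup_relu_flip_le zeta mu {I} (C : I -> Prop) (t : I -> nat -> R) n A K e :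
  (zeta = 1 \/ zeta = -1) -> 0 < mu -> (exists th, C th) -> is_sign e ->
  (forall th, C th -> Rabs (A th) <= K /\ forall s, (s < S n)%nat -> Rabs (t th s) <= K) ->
  (exp (mu * sup_over C (fun th =>
          A th + rsum (S n) (fun s => upd e n 1 s * (zeta * Rmax (t th s) 0)))) +
   exp (mu * sup_over C (fun th =>
          A th + rsum (S n) (fun s => upd e n (-1) s * (zeta * Rmax (t th s) 0))))) / 2 <=
  (exp (mu * sup_over C (fun th =>
          (A th + t th n) + rsum n (fun s => e s * (zeta * Rmax (t th s) 0)))) +
   exp (mu * sup_over C (fun th =>
          (A th - t th n) + rsum n (fun s => e s * (zeta * Rmax (t th s) 0))))) / 2.
Proof.
  intros Hz Hmu Hn He HK.
  assert (HK0 : 0 <= K)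
    by (destruct Hn as [t0 Ht0]; destruct (HK t0 Ht0) as [H _];
        assert (0 <= Rabs (A t0)) by apply Rabs_pos; lra).
  set (B := fun th => A th + rsum n (fun s => e s * (zeta * Rmax (t th s) 0))).
  assert (E : forall a, sup_over C (fun th =>
               A th + rsum (S n) (fun s => upd e n a s * (zeta * Rmax (t th s) 0))) =
             sup_over C (fun th => B th + a * (zeta * Rmax (t th n) 0)))
    by (intros; apply sup_over_ext; intros; unfold B; rewrite rsum_upd; ring).
  rewrite !E.
  rewrite (sup_over_ext C (fun th => B th + 1 * _) (fun th => B th + zeta * Rmax (t th n) 0)),
    (sup_over_ext C (fun th => B th + -1 * _) (fun th => B th - zeta * Rmax (t th n) 0)),
    (sup_over_ext C (fun th => A th + t th n + _) (fun th => B th + t th n)),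
    (sup_over_ext C (fun th => A th - t th n + _) (fun th => B th - t th n))
    by (intros; unfold B; ring).
  assert (H := exp_sup_relu_pair_le zeta mu C B (fun th => t th n) (K + INR n * K) Hz Hmu Hn).
  enough (forall th, C th -> Rabs (B th) <= K + INR n * K /\ Rabs (t th n) <= K + INR n * K)
    by (specialize (H ltac:(auto)); lra).
  intros th Ct. destruct (HK th Ct) as [H1 H2].
  assert (0 <= INR n * K) by (apply Rmult_le_pos; auto; apply pos_INR).
  assert (Rabs (t th n) <= K) by (apply H2; lia).
  assert (Rabs (rsum n (fun s => e s * (zeta * Rmax (t th s) 0))) <= INR n * K).
  { apply Rabs_rsum_sign_le; auto. intros s Hs. rewrite Rabs_mult.
    replace (Rabs zeta) with 1 by (destruct Hz as [-> | ->]; [rewrite Rabs_R1|rewrite Rabs_left]; lra).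
    rewrite Rmult_1_l. apply Rabs_relu_le, H2. lia. }
  split; [unfold B; eapply Rle_trans; [apply Rabs_triang|]|]; lra.
Qed.

(* Contraction principle for exponential moments of suprema; the signs are removed one
   at a time by [exp_sup_relu_flip_le]. *)
Lemma Erad_exp_sup_relu_le zeta mu {I} (C : I -> Prop) (t : I -> nat -> R) :
  (zeta = 1 \/ zeta = -1) -> 0 < mu -> (exists th, C th) ->
  forall n (A : I -> R) K,
  (forall th, C th -> Rabs (A th) <= K /\ forall s, (s < n)%nat -> Rabs (t th s) <= K) ->
  Erad n (fun e => exp (mu * sup_over C (fun th =>
            A th + rsum n (fun s => e s * (zeta * Rmax (t th s) 0))))) <=
  Erad n (fun e => exp (mu * sup_over C (fun th => A th + rsum n (fun s => e s * t th s)))).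
Proof.
  intros Hz Hmu Hn n. induction n; intros A K HK; [rewrite !Erad_0; simpl; lra|].
  assert (HK0 : 0 <= K)
    by (destruct Hn as [t0 Ht0]; destruct (HK t0 Ht0) as [H _];
        assert (0 <= Rabs (A t0)) by apply Rabs_pos; lra).
  rewrite !Erad_S.
  eapply Rle_trans; [apply Erad_mono; intros e He; apply (exp_sup_relu_flip_le _ _ _ _ _ _ K); auto|].
  eapply Rle_trans; [apply Erad_mid_le; [apply (IHn _ (K + K))|apply (IHn _ (K + K))]|].
  1, 2: intros th Ct; destruct (HK th Ct) as [H1 H2];
    assert (Rabs (t th n) <= K) by (apply H2; lia); split;
    [unfold Rminus; eapply Rle_trans; [apply Rabs_triang|]; rewrite ?Rabs_Ropp; lra
    |intros s Hs; assert (Rabs (t th s) <= K) by (apply H2; lia); lra].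
  apply Req_le, Erad_ext. intros e He.
  assert (E : forall a, sup_over C (fun th => A th + rsum (S n) (fun s => upd e n a s * t th s)) =
             sup_over C (fun th => A th + a * t th n + rsum n (fun s => e s * t th s)))
    by (intros; apply sup_over_ext; intros; rewrite rsum_upd; ring).
  rewrite !E,
    (sup_over_ext C (fun th => A th + 1 * t th n + _)
       (fun th => A th + t th n + rsum n (fun s => e s * t th s))),
    (sup_over_ext C (fun th => A th + -1 * t th n + _)
       (fun th => A th - t th n + rsum n (fun s => e s * t th s)))
    by (intros; ring).
  reflexivity.
Qed.

Lemma exp_max_le mu a b : exp (mu * Rmax a b) <= exp (mu * a) + exp (mu * b).
Proof.
  assert (0 < exp (mu * a)) by apply exp_pos. assert (0 < exp (mu * b)) by apply exp_pos.
  unfold Rmax. destruct (Rle_dec a b); lra.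
Qed.

Lemma Erad_exp_sup_abs_relu_le mu {I} (C : I -> Prop) (t : I -> nat -> R) n K :
  0 < mu -> (exists th, C th) ->
  (forall th, C th -> forall s, (s < n)%nat -> Rabs (t th s) <= K) ->
  Erad n (fun e => exp (mu * sup_over C (fun th => Rabs (rsum n (fun s => e s * Rmax (t th s) 0))))) <=
  2 * Erad n (fun e => exp (mu * sup_over C (fun th => rsum n (fun s => e s * t th s)))).
Proof.
  intros Hmu Hn HK.
  assert (HC : forall zeta, (zeta = 1 \/ zeta = -1) ->
    Erad n (fun e => exp (mu * sup_over C (fun th => rsum n (fun s => e s * (zeta * Rmax (t th s) 0))))) <=
    Erad n (fun e => exp (mu * sup_over C (fun th => rsum n (fun s => e s * t th s))))).
  { intros zeta Hz.
    assert (H := Erad_exp_sup_relu_le zeta mu C t Hz Hmu Hn n (fun _ => 0) (Rmax K 0)).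
    rewrite !(Erad_ext n (fun e => exp (mu * sup_over C (fun th => 0 + _)))
      (fun e => exp (mu * sup_over C (fun th => rsum n _)))) in H
      by (intros; do 2 f_equal; apply sup_over_ext; intros; ring).
    apply H. intros th Ct. rewrite Rabs_R0.
    split; [apply Rmax_r|intros s Hs; eapply Rle_trans; [apply HK; auto|apply Rmax_l]]. }
  assert (H1 := HC 1 (or_introl eq_refl)). assert (H2 := HC (-1) (or_intror eq_refl)).
  apply Rle_trans with (Erad n (fun e =>
    exp (mu * sup_over C (fun th => rsum n (fun s => e s * (1 * Rmax (t th s) 0)))) +
    exp (mu * sup_over C (fun th => rsum n (fun s => e s * (-1 * Rmax (t th s) 0))))));
    [|rewrite Erad_plus; lra].
  apply Erad_mono. intros e He.
  assert (Hb : forall zeta, (zeta = 1 \/ zeta = -1) ->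
    bounded_on C (fun th => rsum n (fun s => e s * (zeta * Rmax (t th s) 0)))).
  { intros zeta Hz. apply (bounded_on_of_abs _ _ (INR n * Rmax K 0)). intros th Ct.
    apply Rabs_rsum_sign_le; auto. intros s Hs. rewrite Rabs_mult.
    replace (Rabs zeta) with 1 by (destruct Hz as [-> | ->]; [rewrite Rabs_R1|rewrite Rabs_left]; lra).
    rewrite Rmult_1_l. apply Rabs_relu_le. eapply Rle_trans; [apply HK; auto|apply Rmax_l]. }
  eapply Rle_trans; [|apply exp_max_le]. apply exp_le_exp, Rmult_le_compat_l; [lra|].
  apply sup_over_lub; auto. intros th Ct.
  assert (U1 := sup_over_ub C _ th (Hb 1 (or_introl eq_refl)) Ct).
  assert (U2 := sup_over_ub C _ th (Hb (-1) (or_intror eq_refl)) Ct). cbv beta in U1, U2.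
  rewrite (rsum_ext n _ (fun s => e s * Rmax (t th s) 0)) in U1 by (intros; ring).
  rewrite (rsum_ext n _ (fun s => -1 * (e s * Rmax (t th s) 0))), rsum_scal in U2 by (intros; ring).
  unfold Rabs. destruct (Rcase_abs (rsum n (fun s => e s * Rmax (t th s) 0))).
  - eapply Rle_trans; [|apply Rmax_r]. lra.
  - eapply Rle_trans; [|apply Rmax_l]. lra.
Qed.

Lemma exp_rmaxl_le mu m f : (1 <= m)%nat -> (forall t, 0 <= f t) ->
  exp (mu * rmaxl m f) <= rsum m (fun t => exp (mu * f t)).
Proof.
  intros Hm Hf. induction m; [lia|]. destruct m.
  - simpl. rewrite Rmax_right by auto. lra.
  - change (rmaxl (S (S m)) f) with (Rmax (rmaxl (S m) f) (f (S m))).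
    change (rsum (S (S m)) (fun t => exp (mu * f t))) with
      (rsum (S m) (fun t => exp (mu * f t)) + exp (mu * f (S m))).
    eapply Rle_trans; [apply exp_max_le|]. assert (H := IHm ltac:(lia)). lra.
Qed.

(* Massart's finite class lemma for the 2 m1 functions +- x_t *)
Lemma Erad_max_corr_le n m (x : nat -> nat -> R) : (1 <= n)%nat -> (1 <= m)%nat ->
  (forall s t, (s < n)%nat -> (t < m)%nat -> Rabs (x s t) <= 1) ->
  Erad n (fun e => rmaxl m (fun t => Rabs (rsum n (fun s => e s * x s t)))) <=
  sqrt (2 * INR n * ln (2 * INR m)).
Proof.
  intros Hn Hm Hx.
  assert (HN : 1 <= INR n) by (apply (le_INR 1); lia).
  assert (HM : 1 <= INR m) by (apply (le_INR 1); lia).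
  assert (Hl : 0 < ln (2 * INR m)) by (rewrite <- ln_1; apply ln_increasing; lra).
  set (lam := sqrt (2 * ln (2 * INR m) / INR n)).
  assert (Hlam : 0 < lam) by (apply sqrt_lt_R0, Rdiv_lt_0_compat; lra).
  assert (Hlam2 : lam * lam = 2 * ln (2 * INR m) / INR n)
    by (apply sqrt_sqrt; left; apply Rdiv_lt_0_compat; lra).
  assert (HB : Erad n (fun e => exp (lam * rmaxl m (fun t => Rabs (rsum n (fun s => e s * x s t))))) <=
               2 * INR m * exp (lam * lam * INR n / 2)).
  { eapply Rle_trans; [apply Erad_mono; intros e _; apply exp_rmaxl_le; auto; intros; apply Rabs_pos|].
    rewrite Erad_rsum.
    replace (2 * INR m * exp (lam * lam * INR n / 2))
      with (rsum m (fun _ => 2 * exp (lam * lam * INR n / 2))) by (rewrite rsum_const; ring).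
    apply rsum_le. intros t Ht. apply Erad_exp_abs_lin. intros s Hs. apply Hx; auto. }
  eapply Rle_trans; [apply (Erad_le_of_exp _ _ lam _ Hlam HB)|].
  rewrite ln_mult, ln_exp by (try apply exp_pos; lra). rewrite Hlam2.
  replace (2 * INR n * ln (2 * INR m)) with ((lam * INR n) * (lam * INR n))
    by (replace ((lam * INR n) * (lam * INR n)) with ((lam * lam) * (INR n * INR n)) by ring;
        rewrite Hlam2; field; lra).
  rewrite sqrt_square by nra. apply Req_le.
  apply Rmult_eq_reg_l with lam; [|lra]. field_simplify; try lra.
  replace (lam ^ 2) with (lam * lam) by ring. rewrite Hlam2. field. lra.
Qed.

Lemma rpow_le_exp_scaled y r l : 0 <= y -> 0 < r -> 0 < l ->
  rpow y r <= rpow (r / l) r * exp (l * y - r).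
Proof.
  intros Hy Hr Hl. set (z := l * y / r).
  assert (Hz : 0 <= z) by (unfold z, Rdiv; apply Rmult_le_pos; [nra|left; apply Rinv_0_lt_compat; lra]).
  replace y with (r / l * z) at 1 by (unfold z; field; lra).
  rewrite rpow_mult_distr by (auto; apply Rlt_le, Rdiv_lt_0_compat; lra).
  apply Rmult_le_compat_l; [apply rpow_nonneg|].
  destruct (Req_dec z 0) as [->|]; [rewrite rpow_0_l; left; apply exp_pos|].
  rewrite rpow_Rpower by lra. apply exp_le_exp.
  assert (ln z <= z - 1) by (apply ln_le_minus1; lra).
  replace (l * y - r) with (r * (z - 1)) by (unfold z; field; lra). apply Rmult_le_compat_l; lra.
Qed.

(* Optimising [rpow_le_exp_scaled] at l = sqrt (r / n) against [Erad_exp_abs_lin]. *)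
Lemma Erad_abs_lin_moment_le n a r : (1 <= n)%nat -> 0 < r ->
  (forall s, (s < n)%nat -> Rabs (a s) <= 1) ->
  Erad n (fun e => rpow (Rabs (rsum n (fun s => e s * a s))) r) <=
  2 * rpow (sqrt (r * INR n) * exp (- / 2)) r.
Proof.
  intros Hn Hr Ha. assert (HN : 0 < INR n) by (apply lt_0_INR; lia).
  set (l := sqrt (r / INR n)). assert (Hl : 0 < l) by (apply sqrt_lt_R0, Rdiv_lt_0_compat; lra).
  assert (Hl2 : l * l = r / INR n) by (apply sqrt_sqrt; left; apply Rdiv_lt_0_compat; lra).
  assert (Hrl : r / l = sqrt (r * INR n)).
  { apply Rmult_eq_reg_l with l; [|lra]. replace (l * (r / l)) with r by (field; lra).
    unfold l. rewrite <- sqrt_mult_alt by (left; apply Rdiv_lt_0_compat; lra).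
    replace (r / INR n * (r * INR n)) with (r * r) by (field; lra). rewrite sqrt_square; lra. }
  apply Rle_trans with (Erad n (fun e => rpow (r / l) r * exp (- r) *
                                  exp (l * Rabs (rsum n (fun s => e s * a s))))).
  - apply Erad_mono. intros e He.
    rewrite Rmult_assoc, <- exp_plus, Rplus_comm.
    apply rpow_le_exp_scaled; auto. apply Rabs_pos.
  - rewrite Erad_scal. eapply Rle_trans.
    { apply Rmult_le_compat_l; [apply Rmult_le_pos; [apply rpow_nonneg|left; apply exp_pos]|].
      apply Erad_exp_abs_lin; auto. }
    rewrite Hl2, Hrl. replace (r / INR n * INR n / 2) with (r / 2) by (field; lra).
    rewrite rpow_mult_distr by (try (left; apply exp_pos); apply sqrt_pos).
    rewrite (rpow_Rpower (exp (- / 2))) by apply exp_pos. unfold Rpower at 1. rewrite ln_exp.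
    apply Req_le. replace (- r) with (- / 2 * r + - (r / 2)) by field.
    rewrite !exp_plus.
    assert (E : exp (- (r / 2)) * exp (r / 2) = 1) by (rewrite <- exp_plus, Rplus_opp_l; apply exp_0).
    replace (r * - / 2) with (- / 2 * r) by ring.
    transitivity (2 * (rpow (sqrt (r * INR n)) r * exp (- / 2 * r)) * (exp (- (r / 2)) * exp (r / 2)));
      [ring|rewrite E; ring].
Qed.

Definition aff (a : nat) (v : nat -> R) (h : nat -> R) : R :=
  v 0%nat + rsum a (fun r => v (S r) * h r).

Lemma affine_aff a V u j : affine a V u j = aff a (fun r => V r j) u.
Proof. reflexivity. Qed.

Lemma aff_ext a v v' h : (forall r, (r < S a)%nat -> v r = v' r) -> aff a v h = aff a v' h.
Proof.
  intros H. unfold aff. rewrite H by lia. f_equal.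
  apply rsum_ext. intros r Hr. rewrite H by lia. reflexivity.
Qed.

Lemma aff_scal a N v h : aff a (fun r => N * v r) h = N * aff a v h.
Proof.
  unfold aff. rewrite (rsum_ext a _ (fun r => N * (v (S r) * h r))), rsum_scal by (intros; ring).
  ring.
Qed.

Lemma Rabs_aff_le a v h B B' : (forall r, (r < S a)%nat -> Rabs (v r) <= B) -> 0 <= B ->
  (forall r, (r < a)%nat -> Rabs (h r) <= B') -> 0 <= B' ->
  Rabs (aff a v h) <= B * (1 + INR a * B').
Proof.
  intros Hv HB Hh HB'. unfold aff. eapply Rle_trans; [apply Rabs_triang|].
  assert (Rabs (v 0%nat) <= B) by (apply Hv; lia).
  assert (Rabs (rsum a (fun r => v (S r) * h r)) <= INR a * (B * B')).
  { eapply Rle_trans; [apply Rabs_rsum_le|]. rewrite <- rsum_const. apply rsum_le. intros r Hr.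
    rewrite Rabs_mult. apply Rmult_le_compat; try apply Rabs_pos; [apply Hv; lia|apply Hh; auto]. }
  nra.
Qed.

Lemma relu_scal N y : 0 <= N -> Rmax (N * y) 0 = N * Rmax y 0.
Proof. intros HN. unfold Rmax. destruct (Rle_dec (N * y) 0); destruct (Rle_dec y 0); nra. Qed.

Lemma lp_unit_split p a v : rsum (S a) (fun r => rpow (Rabs (v r)) p) <= 1 ->
  rpow (Rabs (v 0%nat)) p <= 1 /\ rsum a (fun j => rpow (Rabs (v (S j))) p) <= 1.
Proof.
  intros H. rewrite rsum_shift in H. assert (0 <= rpow (Rabs (v 0%nat)) p) by apply rpow_nonneg.
  assert (0 <= rsum a (fun j => rpow (Rabs (v (S j))) p)) by (apply rsum_nonneg; intros; apply rpow_nonneg).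
  lra.
Qed.

Lemma lp_unit_of_col_norm p s1 A j N : 1 <= p -> col_norm p s1 A j <= N -> 0 < N ->
  rsum s1 (fun r => rpow (Rabs (A r j / N)) p) <= 1.
Proof.
  intros Hp HN HN0.
  assert (HS : rsum s1 (fun r => rpow (Rabs (A r j)) p) = rpow (col_norm p s1 A j) p).
  { unfold col_norm. rewrite rpow_inv_rpow; auto; [|lra].
    apply rsum_nonneg; intros; apply rpow_nonneg. }
  rewrite (rsum_ext _ _ (fun r => rpow (/ N) p * rpow (Rabs (A r j)) p)), rsum_scal, HS.
  - rewrite <- (rpow_inv_l N p) by auto. apply Rmult_le_compat_l; [apply rpow_nonneg|].
    apply rpow_le_compat_l; [lra|split; [apply rpow_nonneg|auto]].
  - intros r _. unfold Rdiv. rewrite Rabs_mult, Rabs_inv, (Rabs_right N) by lra.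
    rewrite Rmult_comm, rpow_mult_distr; auto; [left; apply Rinv_0_lt_compat|apply Rabs_pos]; auto.
Qed.

Lemma col_norm_nonneg p s1 A j : 0 <= col_norm p s1 A j.
Proof. apply rpow_nonneg. Qed.

Lemma Rabs_entry_le_col_norm p s1 A r j : 1 <= p -> (r < s1)%nat ->
  Rabs (A r j) <= col_norm p s1 A j.
Proof.
  intros Hp Hr. unfold col_norm.
  rewrite <- (rpow_rpow_inv (Rabs (A r j)) p) by (try apply Rabs_pos; lra).
  apply rpow_le_compat_l; [apply Rlt_le, Rdiv_lt_0_compat; lra|split; [apply rpow_nonneg|]].
  apply (rsum_ge_term s1 (fun i => rpow (Rabs (A i j)) p)); auto. intros; apply rpow_nonneg.
Qed.

Lemma lq_bounded_of_mat_norm p q s1 s2 A c : ext_ge1 q -> 0 < c ->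
  mat_norm p q s1 s2 A = c -> lq_bounded q s2 (col_norm p s1 A) c.
Proof.
  intros Hq Hc H. destruct q as [q'|]; simpl in *.
  - rewrite <- H, rpow_inv_rpow; [lra|apply rsum_nonneg; intros; apply rpow_nonneg|lra].
  - intros j Hj. rewrite <- H. apply rmaxl_ge_term; auto.
Qed.

Lemma lq_bounded_le q d N c j : ext_ge1 q -> 0 < c -> (forall j, (j < d)%nat -> 0 <= N j) ->
  lq_bounded q d N c -> (j < d)%nat -> N j <= c.
Proof.
  intros Hq Hc HN H Hj. destruct q as [q'|]; simpl in *; auto.
  apply (rpow_le_reg_l _ _ q'); try lra; auto. eapply Rle_trans; [|apply H].
  apply (rsum_ge_term d (fun j => rpow (N j) q')); auto. intros; apply rpow_nonneg.
Qed.

Definition corner_mx (c : R) : nat -> nat -> R :=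
  fun r j => if andb (Nat.eqb r 0) (Nat.eqb j 0) then c else 0.

Lemma mat_norm_corner_mx p q s1 s2 c : 1 <= p -> ext_ge1 q -> 0 < c ->
  (1 <= s1)%nat -> (1 <= s2)%nat -> mat_norm p q s1 s2 (corner_mx c) = c.
Proof.
  intros Hp Hq Hc H1 H2.
  assert (HC : forall j, col_norm p s1 (corner_mx c) j = if Nat.eqb j 0 then c else 0).
  { intros j. unfold col_norm, corner_mx. destruct (Nat.eqb_spec j 0).
    - rewrite (rsum_single s1 _ 0); [|lia|].
      + simpl. rewrite Rabs_right by lra. apply rpow_rpow_inv; lra.
      + intros i Hi Hne. destruct (Nat.eqb_spec i 0); [lia|]. simpl. rewrite Rabs_R0; apply rpow_0_l.
    - rewrite (rsum_ext s1 _ (fun _ => 0)), rsum_zero, rpow_0_l; auto.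
      intros i Hi. rewrite Bool.andb_false_r. rewrite Rabs_R0; apply rpow_0_l. }
  destruct q as [q'|]; simpl in Hq |- *.
  - rewrite (rsum_single s2 _ 0); [|lia|].
    + rewrite HC. simpl. apply rpow_rpow_inv; lra.
    + intros j Hj Hne. rewrite HC. destruct (Nat.eqb_spec j 0); [lia|apply rpow_0_l].
  - rewrite rmaxl_single; [now rewrite HC|auto|rewrite HC; simpl; lra|].
    intros j Hj. rewrite HC. destruct (Nat.eqb_spec j 0); [lia|auto].
Qed.

(** * The input layer *)

Lemma exp1_ge : 64 / 27 <= exp 1.
Proof.
  assert (H := exp_ineq1_le (1 / 3)).
  replace (exp 1) with (exp (1 / 3) * exp (1 / 3) * exp (1 / 3))
    by (rewrite <- !exp_plus; f_equal; field).
  assert ((1 + 1 / 3) * (1 + 1 / 3) <= exp (1 / 3) * exp (1 / 3)) by (apply Rmult_le_compat; lra).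
  assert ((1 + 1 / 3) * (1 + 1 / 3) * (1 + 1 / 3) <= exp (1 / 3) * exp (1 / 3) * exp (1 / 3))
    by (apply Rmult_le_compat; nra).
  lra.
Qed.

(* the constant 2^(1/r) sqrt(r / e) of the moment method, for r = p^* >= 2 *)
Lemma moment_const_le r : 2 <= r ->
  rpow 2 (1 / r) * sqrt r * exp (- / 2) <= sqrt (r - 1) + (sqrt 2 - 1).
Proof.
  intros Hr.
  assert (H2 : rpow 2 (1 / r) <= sqrt 2).
  { rewrite rpow_Rpower, <- Rpower_sqrt by lra. apply Rle_Rpower; [lra|].
    unfold Rdiv. rewrite Rmult_1_l. apply Rinv_le_contravar; lra. }
  set (w := exp (- / 2)). assert (Hw : 0 < w) by apply exp_pos.
  assert (Hw2 : w * w <= 27 / 64).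
  { unfold w. rewrite <- exp_plus. replace (- / 2 + - / 2) with (- 1) by field.
    assert (exp (-1) * exp 1 = 1)
      by (rewrite <- exp_plus; replace (-1 + 1) with 0 by ring; apply exp_0).
    assert (H1 := exp1_ge). assert (0 < exp (-1)) by apply exp_pos. nra. }
  set (s2 := sqrt 2) in *. assert (Hs2 : s2 * s2 = 2) by (apply sqrt_sqrt; lra).
  assert (Hs20 : 0 <= s2) by apply sqrt_pos.
  set (A := sqrt r). assert (HA : A * A = r) by (apply sqrt_sqrt; lra). assert (0 <= A) by apply sqrt_pos.
  set (Bq := sqrt (r - 1)). assert (HB : Bq * Bq = r - 1) by (apply sqrt_sqrt; lra).
  assert (0 <= Bq) by apply sqrt_pos. assert (1 <= Bq) by nra.
  assert (1.41 <= s2 <= 1.415) by nra.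
  assert (rpow 2 (1 / r) * A * w <= s2 * A * w) by (apply Rmult_le_compat_r; [lra|]; apply Rmult_le_compat_r; lra).
  enough (s2 * A * w <= Bq + (s2 - 1)) by lra.
  assert (0 <= s2 * A * w) by (apply Rmult_le_pos; [apply Rmult_le_pos|]; lra).
  assert ((s2 * A * w) * (s2 * A * w) = 2 * r * (w * w)) by (rewrite <- Hs2, <- HA; ring).
  assert (2 * r * (w * w) <= 2 * r * (27 / 64)) by (apply Rmult_le_compat_l; lra).
  nra.
Qed.

Section Input.

Variables (p : R) (m1 n : nat) (x : nat -> nat -> R).
Hypothesis hp : 1 <= p.
Hypothesis hm1 : (1 <= m1)%nat.
Hypothesis hx : forall i t, (i < n)%nat -> (t < m1)%nat -> -1 <= x i t <= 1.

Definition m1_scale : R := rpow (INR m1) (1 - 1 / p).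

Definition lp_unit (u : nat -> R) : Prop := rsum m1 (fun t => rpow (Rabs (u t)) p) <= 1.

Definition input_corr (e u : nat -> R) : R := rsum n (fun s => e s * rsum m1 (fun t => u t * x s t)).

Definition input_sup (e : nat -> R) : R := sup_over lp_unit (input_corr e).

Lemma m1_scale_pos : 0 < m1_scale.
Proof. apply rpow_gt0, lt_0_INR; lia. Qed.

Lemma lp_unit_0 : lp_unit (fun _ => 0).
Proof.
  unfold lp_unit. rewrite (rsum_ext _ _ (fun _ => 0)), rsum_zero; [lra|].
  intros; rewrite Rabs_R0; apply rpow_0_l.
Qed.

Lemma input_corr_swap e u :
  input_corr e u = rsum m1 (fun t => u t * rsum n (fun s => e s * x s t)).
Proof.
  unfold input_corr. transitivity (rsum n (fun s => rsum m1 (fun t => u t * (e s * x s t)))).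
  - apply rsum_ext; intros s _. rewrite <- rsum_scal. apply rsum_ext; intros; ring.
  - rewrite rsum_swap. apply rsum_ext; intros t _. rewrite <- rsum_scal. reflexivity.
Qed.

Lemma Rabs_inner_le u s : lp_unit u -> (s < n)%nat -> Rabs (rsum m1 (fun t => u t * x s t)) <= m1_scale.
Proof.
  intros Hu Hs. eapply Rle_trans; [apply Rabs_rsum_le|].
  eapply Rle_trans; [|apply (lp_unit_l1_le p m1 u hp hm1 Hu)].
  apply rsum_le. intros t Ht. rewrite Rabs_mult. assert (H := hx s t Hs Ht).
  assert (Rabs (x s t) <= 1) by (apply Rabs_le; lra). assert (0 <= Rabs (u t)) by apply Rabs_pos. nra.
Qed.

Lemma input_corr_bounded e : is_sign e -> bounded_on lp_unit (input_corr e).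
Proof.
  intros He. apply (bounded_on_of_abs _ _ (INR n * m1_scale)). intros u Hu.
  apply Rabs_rsum_sign_le; auto. intros; apply Rabs_inner_le; auto.
Qed.

Lemma input_sup_bounded_diff : bounded_diff n input_sup (2 * m1_scale).
Proof.
  intros s Hs e e' He He' Hee. apply Rabs_sup_over_diff.
  - exists (fun _ => 0). apply lp_unit_0.
  - apply input_corr_bounded; auto.
  - apply input_corr_bounded; auto.
  - intros u Hu. unfold input_corr. rewrite <- rsum_minus, (rsum_single n _ s Hs).
    + rewrite <- Rmult_minus_distr_r, Rabs_mult.
      assert (Rabs (e s - e' s) <= 2)
        by (destruct (He s) as [-> | ->]; destruct (He' s) as [-> | ->]; apply Rabs_le; lra).
      assert (H2 := Rabs_inner_le u s Hu Hs). assert (0 <= Rabs (e s - e' s)) by apply Rabs_pos.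
      assert (0 <= Rabs (rsum m1 (fun t => u t * x s t))) by apply Rabs_pos. nra.
    + intros i Hi Hne. rewrite Hee by auto. ring.
Qed.

Lemma input_sup_le_max e : is_sign e ->
  input_sup e <= m1_scale * rmaxl m1 (fun t => Rabs (rsum n (fun s => e s * x s t))).
Proof.
  intros He. apply sup_over_lub; [exists (fun _ => 0); apply lp_unit_0|]. intros u Hu.
  set (Mx := rmaxl m1 (fun t => Rabs (rsum n (fun s => e s * x s t)))).
  rewrite input_corr_swap. apply Rle_trans with (rsum m1 (fun t => Mx * Rabs (u t))).
  - apply rsum_le. intros t Ht. eapply Rle_trans; [apply Rle_abs|].
    rewrite Rabs_mult, Rmult_comm. apply Rmult_le_compat_r; [apply Rabs_pos|].
    apply (rmaxl_ge_term m1 (fun t => Rabs (rsum n (fun s => e s * x s t)))); auto.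
  - rewrite rsum_scal, Rmult_comm. apply Rmult_le_compat_r; [apply rmaxl_nonneg|].
    apply lp_unit_l1_le; auto.
Qed.

Lemma Erad_input_sup_le_massart : (1 <= n)%nat ->
  Erad n input_sup <= m1_scale * sqrt (2 * INR n * ln (2 * INR m1)).
Proof.
  intros Hn. eapply Rle_trans; [apply Erad_mono, input_sup_le_max|].
  rewrite Erad_scal. apply Rmult_le_compat_l; [left; apply m1_scale_pos|].
  apply Erad_max_corr_le; auto. intros s t Hs Ht. apply Rabs_le. apply hx; auto.
Qed.

(* Young's inequality |u_t X_t| <= B (|u_t|^p / p + |X_t / B|^r / r) with r = p^* *)
Lemma input_sup_le_young B e : 1 < p -> 0 < B ->
  input_sup e <= B * (1 / p + 1 / pstar p *
    (rsum m1 (fun t => rpow (Rabs (rsum n (fun s => e s * x s t))) (pstar p)) * rpow (/ B) (pstar p))).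
Proof.
  intros Hp1 HB. set (r := pstar p). assert (Hr : 0 < r) by (unfold r, pstar; apply Rdiv_lt_0_compat; lra).
  assert (Hpr : 1 / p + 1 / r = 1) by (unfold r, pstar; field; lra).
  assert (HiB : 0 < / B) by (apply Rinv_0_lt_compat; auto).
  apply sup_over_lub; [exists (fun _ => 0); apply lp_unit_0|]. intros u Hu.
  rewrite input_corr_swap.
  apply Rle_trans with (rsum m1 (fun t => B * (1 / p * rpow (Rabs (u t)) p +
    1 / r * (rpow (Rabs (rsum n (fun s => e s * x s t))) r * rpow (/ B) r)))).
  - apply rsum_le. intros t Ht. set (X := rsum n (fun s => e s * x s t)).
    eapply Rle_trans; [apply Rle_abs|]. rewrite Rabs_mult.
    assert (E1 : rpow (rpow (Rabs (u t)) p) (1 / p) = Rabs (u t))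
      by (apply rpow_rpow_inv; [apply Rabs_pos|lra]).
    assert (E2 : rpow (rpow (Rabs X * / B) r) (1 / r) = Rabs X * / B)
      by (apply rpow_rpow_inv; [apply Rmult_le_pos; [apply Rabs_pos|lra]|lra]).
    replace (Rabs (u t) * Rabs X) with
      (B * (rpow (rpow (Rabs (u t)) p) (1 / p) * rpow (rpow (Rabs X * / B) r) (1 / r)))
      by (rewrite E1, E2; field; lra).
    apply Rmult_le_compat_l; [lra|]. rewrite <- rpow_mult_distr by (try apply Rabs_pos; lra).
    apply weighted_amgm2; try apply rpow_nonneg; auto; apply Rlt_le, Rdiv_lt_0_compat; lra.
  - rewrite rsum_scal. apply Rmult_le_compat_l; [lra|]. rewrite rsum_plus, !rsum_scal.
    assert (1 / p * rsum m1 (fun t => rpow (Rabs (u t)) p) <= 1 / p)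
      by (assert (0 < 1 / p) by (apply Rdiv_lt_0_compat; lra); unfold lp_unit in Hu; nra).
    rewrite (rsum_ext m1 (fun t => rpow (Rabs (rsum n (fun s => e s * x s t))) r * rpow (/ B) r)
      (fun t => rpow (/ B) r * rpow (Rabs (rsum n (fun s => e s * x s t))) r)), rsum_scal
      by (intros; ring).
    rewrite (Rmult_comm (rpow (/ B) r)). lra.
Qed.

(* Young's inequality with B = (2 m1)^(1/r) sqrt(r n / e), and E|X_t|^r <= 2 (sqrt(r n / e))^r. *)
Lemma Erad_input_sup_le_moment : 1 < p <= 2 -> (1 <= n)%nat ->
  Erad n input_sup <= m1_scale * sqrt (INR n) * (sqrt (pstar p - 1) + (sqrt 2 - 1)).
Proof.
  intros Hp Hn. set (r := pstar p).
  assert (Hr2 : 2 <= r).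
  { unfold r, pstar. apply Rmult_le_reg_r with (p - 1); [lra|].
    unfold Rdiv. rewrite Rmult_assoc, Rinv_l; lra. }
  assert (Hpr : 1 / p + 1 / r = 1) by (unfold r, pstar; field; lra).
  assert (HN : 0 < INR n) by (apply lt_0_INR; lia). assert (HM : 1 <= INR m1) by (apply (le_INR 1); lia).
  set (sg := sqrt (r * INR n) * exp (- / 2)).
  assert (Hsg : 0 < sg) by (apply Rmult_lt_0_compat; [apply sqrt_lt_R0; nra|apply exp_pos]).
  set (B := rpow (2 * INR m1) (1 / r) * sg).
  assert (HB : 0 < B) by (apply Rmult_lt_0_compat; [apply rpow_gt0; lra|auto]).
  assert (HBr : rpow B r = 2 * INR m1 * rpow sg r)
    by (unfold B; rewrite rpow_mult_distr, rpow_inv_rpow by (try apply rpow_nonneg; lra); reflexivity).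
  assert (Hmom : forall t, (t < m1)%nat ->
    Erad n (fun e => rpow (Rabs (rsum n (fun s => e s * x s t))) r) <= 2 * rpow sg r).
  { intros t Ht. apply Erad_abs_lin_moment_le; auto; [lra|].
    intros s Hs. apply Rabs_le, hx; auto. }
  apply Rle_trans with (B * (1 / p + 1 / r * (rsum m1 (fun t => 2 * rpow sg r) * rpow (/ B) r))).
  - eapply Rle_trans; [apply Erad_mono; intros e _; apply (input_sup_le_young B e); lra|].
    fold r. rewrite Erad_scal. apply Rmult_le_compat_l; [lra|].
    rewrite Erad_plus, Erad_const, Erad_scal.
    rewrite (Erad_ext n _ (fun e => rpow (/ B) r *
      rsum m1 (fun t => rpow (Rabs (rsum n (fun s => e s * x s t))) r))), Erad_scal, Erad_rsum
      by (intros; ring).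
    apply Rplus_le_compat_l, Rmult_le_compat_l; [apply Rlt_le, Rdiv_lt_0_compat; lra|].
    rewrite (Rmult_comm (rsum m1 _)). apply Rmult_le_compat_l; [apply rpow_nonneg|].
    apply rsum_le. auto.
  - rewrite rsum_const.
    replace (INR m1 * (2 * rpow sg r) * rpow (/ B) r) with (rpow (/ B) r * rpow B r) by (rewrite HBr; ring).
    rewrite rpow_inv_l, Rmult_1_r, Hpr, Rmult_1_r by auto.
    unfold B, sg. rewrite rpow_mult_distr, sqrt_mult_alt by lra.
    replace (rpow (INR m1) (1 / r)) with m1_scale by (unfold m1_scale, r, pstar; f_equal; field; lra).
    assert (0 < m1_scale) by apply m1_scale_pos. assert (0 < sqrt (INR n)) by (apply sqrt_lt_R0; lra).
    replace (rpow 2 (1 / r) * m1_scale * (sqrt r * sqrt (INR n) * exp (- / 2))) with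
      (m1_scale * sqrt (INR n) * (rpow 2 (1 / r) * sqrt r * exp (- / 2))) by ring.
    apply Rmult_le_compat_l; [apply Rmult_le_pos; lra|]. apply moment_const_le; auto.
Qed.

End Input.

(** * Peeling the network *)

Section Network.

Variables (p : R) (q : extR) (k m1 : nat) (dh : nat -> nat) (c : R) (n : nat) (x : nat -> nat -> R).
Hypothesis hp : 1 <= p.
Hypothesis hq : ext_ge1 q.
Hypothesis hm1 : (1 <= m1)%nat.
Hypothesis hdh : forall i, (1 <= i <= k)%nat -> (1 <= dh i)%nat.
Hypothesis hc : 0 < c.
Hypothesis hx : forall i t, (i < n)%nat -> (t < m1)%nat -> -1 <= x i t <= 1.

Let wd (i : nat) : nat := width k m1 dh i.

Definition layers_normed (i : nat) (W : nat -> nat -> nat -> R) : Prop :=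
  forall l, (1 <= l <= i)%nat -> mat_norm p q (S (wd (l - 1))) (wd l) (W l) = c.

(* th = (W, v): the first i layers W, read out by an affine form v with ||v||_p <= 1 *)
Definition readouts (i : nat) (th : (nat -> nat -> nat -> R) * (nat -> R)) : Prop :=
  layers_normed i (fst th) /\ rsum (S (wd i)) (fun r => rpow (Rabs (snd th r)) p) <= 1.

Definition readout (i : nat) (th : (nat -> nat -> nat -> R) * (nat -> R)) (xx : nat -> R) : R :=
  aff (wd i) (snd th) (hidden k m1 dh (fst th) xx i).

Definition sup_readout (i : nat) (e : nat -> R) : R :=
  sup_over (readouts i) (fun th => rsum n (fun s => e s * readout i th (x s))).

Definition sup_relu_readout (i : nat) (e : nat -> R) : R :=
  sup_over (readouts i) (fun th => Rabs (rsum n (fun s => e s * Rmax (readout i th (x s)) 0))).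

Lemma wd_ge1 i : (1 <= wd i)%nat.
Proof.
  unfold wd, width. destruct (Nat.eqb_spec i 0); [auto|].
  destruct (Nat.leb_spec i k); [apply hdh|]; lia.
Qed.

Lemma wd_dh i : (1 <= i <= k)%nat -> wd i = dh i.
Proof.
  intros H. unfold wd, width. destruct (Nat.eqb_spec i 0); [lia|].
  destruct (Nat.leb_spec i k); [reflexivity|lia].
Qed.

Lemma Rabs_weight_le i W l r j : layers_normed i W -> (1 <= l <= i)%nat ->
  (r < S (wd (l - 1)))%nat -> (j < wd l)%nat -> Rabs (W l r j) <= c.
Proof.
  intros HW Hl Hr Hj. eapply Rle_trans; [apply Rabs_entry_le_col_norm; eauto|].
  apply (lq_bounded_le q (wd l)); auto.
  - intros; apply col_norm_nonneg.
  - apply lq_bounded_of_mat_norm; auto.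
Qed.

Fixpoint hidden_bound (i : nat) : R :=
  match i with O => 1 | S i' => c * (1 + INR (wd i') * hidden_bound i') end.

Lemma hidden_bound_nonneg i : 0 <= hidden_bound i.
Proof.
  induction i; simpl; [lra|]. apply Rmult_le_pos; [lra|].
  assert (0 <= INR (wd i)) by apply pos_INR. nra.
Qed.

Lemma Rabs_hidden_le i W s j : layers_normed i W -> (s < n)%nat -> (j < wd i)%nat ->
  Rabs (hidden k m1 dh W (x s) i j) <= hidden_bound i.
Proof.
  revert j. induction i; intros j HW Hs Hj.
  - apply Rabs_le, hx; auto.
  - simpl hidden. unfold relu. rewrite affine_aff. fold (wd i).
    apply Rle_trans with (Rabs (aff (wd i) (fun r => W (S i) r j) (hidden k m1 dh W (x s) i))).
    { unfold Rmax. destruct (Rle_dec _ 0); [rewrite Rabs_R0; apply Rabs_pos|lra]. }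
    apply Rabs_aff_le; [|lra| |apply hidden_bound_nonneg].
    + intros r Hr. apply (Rabs_weight_le (S i) W (S i)); auto; [lia|].
      simpl. rewrite Nat.sub_0_r. auto.
    + intros r Hr. apply IHi; auto. intros l Hl. apply HW. lia.
Qed.

Definition readout_bound (i : nat) : R := 1 + INR (wd i) * hidden_bound i.

Lemma Rabs_readout_le i th s : readouts i th -> (s < n)%nat ->
  Rabs (readout i th (x s)) <= readout_bound i.
Proof.
  intros [HW Hv] Hs. unfold readout, readout_bound. rewrite <- (Rmult_1_l (1 + _)).
  apply Rabs_aff_le; [|lra| |apply hidden_bound_nonneg].
  - intros r Hr. apply (Rabs_le1_of_rpow p); auto. eapply Rle_trans; [|apply Hv].
    apply (rsum_ge_term (S (wd i)) (fun r => rpow (Rabs (snd th r)) p)); auto.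
    intros; apply rpow_nonneg.
  - intros r Hr. apply Rabs_hidden_le; auto.
Qed.

Lemma readouts_corner i : readouts i (fun _ => corner_mx c, fun _ => 0).
Proof.
  split.
  - intros l Hl. apply mat_norm_corner_mx; auto; [lia|apply wd_ge1].
  - cbn [snd]. rewrite (rsum_ext _ _ (fun _ => 0)), rsum_zero; [lra|].
    intros; rewrite Rabs_R0; apply rpow_0_l.
Qed.

Lemma readouts_nonempty i : exists th, readouts i th.
Proof. eexists; apply readouts_corner. Qed.

Lemma corr_readout_bounded i e : is_sign e ->
  bounded_on (readouts i) (fun th => rsum n (fun s => e s * readout i th (x s))).
Proof.
  intros He. apply (bounded_on_of_abs _ _ (INR n * readout_bound i)). intros th Cth.
  apply Rabs_rsum_sign_le; auto. intros; apply Rabs_readout_le; auto.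
Qed.

Lemma corr_relu_readout_bounded i e : is_sign e ->
  bounded_on (readouts i) (fun th => Rabs (rsum n (fun s => e s * Rmax (readout i th (x s)) 0))).
Proof.
  intros He. apply (bounded_on_of_abs _ _ (INR n * readout_bound i)). intros th Cth.
  rewrite Rabs_Rabsolu. apply Rabs_rsum_sign_le; auto.
  intros; apply Rabs_relu_le, Rabs_readout_le; auto.
Qed.

Lemma sup_relu_readout_nonneg i e : is_sign e -> 0 <= sup_relu_readout i e.
Proof.
  intros He. eapply Rle_trans; [|apply (sup_over_ub _ _ _ (corr_relu_readout_bounded i e He) (readouts_corner i))].
  apply Rabs_pos.
Qed.

Lemma sup_readout_nonneg i e : is_sign e -> 0 <= sup_readout i e.
Proof.
  intros He. eapply Rle_trans; [|apply (sup_over_ub _ _ _ (corr_readout_bounded i e He) (readouts_corner i))].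
  unfold readout, aff. cbn [snd]. rewrite (rsum_ext n _ (fun _ => 0)), rsum_zero; [lra|].
  intros s _. rewrite (rsum_ext _ _ (fun _ => 0)), rsum_zero by (intros; ring). ring.
Qed.

(* A neuron of layer i+1 is a ReLU of a readout of layer i, scaled by the lp norm N of its weights. *)
Lemma Rabs_corr_hidden_le i W r e : layers_normed (S i) W -> (r < wd (S i))%nat -> is_sign e ->
  Rabs (rsum n (fun s => e s * hidden k m1 dh W (x s) (S i) r)) <=
  col_norm p (S (wd i)) (W (S i)) r * sup_relu_readout i e.
Proof.
  intros HW Hr He. set (N := col_norm p (S (wd i)) (W (S i)) r).
  assert (HN : 0 <= N) by apply col_norm_nonneg.
  assert (Hent : forall r', (r' < S (wd i))%nat -> Rabs (W (S i) r' r) <= N)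
    by (intros; apply Rabs_entry_le_col_norm; auto).
  destruct (Req_dec N 0) as [H0|H0].
  - assert (Hw0 : forall r', (r' < S (wd i))%nat -> W (S i) r' r = 0)
      by (intros r' Hr'; specialize (Hent r' Hr'); rewrite H0 in Hent;
          destruct (Req_dec (W (S i) r' r) 0); auto;
          assert (0 < Rabs (W (S i) r' r)) by (apply Rabs_pos_lt; auto); lra).
    rewrite H0, Rmult_0_l, (rsum_ext n _ (fun _ => 0)), rsum_zero, Rabs_R0; [lra|].
    intros s Hs. simpl hidden. unfold relu. rewrite affine_aff, (aff_ext _ _ (fun _ => 0)) by auto.
    unfold aff. rewrite (rsum_ext _ _ (fun _ => 0)), rsum_zero by (intros; ring).
    rewrite Rplus_0_r, Rmax_right; lra.
  - set (v := fun r' => W (S i) r' r / N).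
    assert (Cv : readouts i (W, v)).
    { split; [intros l Hl; apply HW; lia|]. cbn [snd]. unfold v.
      apply lp_unit_of_col_norm; [auto|unfold N; lra|lra]. }
    assert (E : rsum n (fun s => e s * hidden k m1 dh W (x s) (S i) r) =
                N * rsum n (fun s => e s * Rmax (readout i (W, v) (x s)) 0)).
    { rewrite <- rsum_scal. apply rsum_ext. intros s Hs. simpl hidden. unfold relu.
      rewrite affine_aff, (aff_ext _ _ (fun r' => N * v r')) by (unfold v; intros; field; lra).
      rewrite aff_scal, relu_scal by lra. unfold readout. cbn [fst snd]. fold (wd i). ring. }
    rewrite E, Rabs_mult, Rabs_right by lra. apply Rmult_le_compat_l; auto.
    apply (sup_over_ub (readouts i) (fun th => Rabs (rsum n (fun s => e s * Rmax (readout i th (x s)) 0))) (W, v)); auto.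
    apply corr_relu_readout_bounded; auto.
Qed.

Definition beta : R := pos_part (inv_pstar p - inv_ext q).

Lemma sup_readout_S_le i e : is_sign e -> (S i <= k)%nat ->
  sup_readout (S i) e <= Rabs (rsum n (fun s => e s)) + c * rpow (INR (dh (S i))) beta * sup_relu_readout i e.
Proof.
  intros He Hi. apply sup_over_lub; [apply readouts_nonempty|].
  intros [W v] [HW Hv]. cbn [fst snd] in *. unfold readout, aff. cbn [fst snd].
  set (D := wd (S i)).
  assert (E : rsum n (fun s => e s * (v 0%nat + rsum D (fun r => v (S r) * hidden k m1 dh W (x s) (S i) r))) =
     v 0%nat * rsum n (fun s => e s) + rsum D (fun r => v (S r) * rsum n (fun s => e s * hidden k m1 dh W (x s) (S i) r))).
  { rewrite (rsum_ext n _ (fun s => v 0%nat * e s + rsum D (fun r => v (S r) * (e s * hidden k m1 dh W (x s) (S i) r)))).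
    - rewrite rsum_plus, rsum_scal, rsum_swap. f_equal.
      apply rsum_ext. intros r _. apply rsum_scal.
    - intros s _. rewrite Rmult_plus_distr_l, <- rsum_scal. f_equal; [ring|].
      apply rsum_ext; intros; ring. }
  rewrite E. destruct (lp_unit_split p D v Hv) as [Hv0 Hv1].
  assert (HG := sup_relu_readout_nonneg i e He).
  assert (B1 : v 0%nat * rsum n (fun s => e s) <= Rabs (rsum n (fun s => e s))).
  { eapply Rle_trans; [apply Rle_abs|]. rewrite Rabs_mult.
    assert (Rabs (v 0%nat) <= 1) by (apply (Rabs_le1_of_rpow p); auto).
    assert (0 <= Rabs (rsum n (fun s => e s))) by apply Rabs_pos.
    assert (0 <= Rabs (v 0%nat)) by apply Rabs_pos. nra. }
  assert (B2 : rsum D (fun r => v (S r) * rsum n (fun s => e s * hidden k m1 dh W (x s) (S i) r)) <=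
     rsum D (fun r => Rabs (v (S r)) * col_norm p (S (wd i)) (W (S i)) r) * sup_relu_readout i e).
  { rewrite Rmult_comm, <- rsum_scal. apply rsum_le. intros r Hr.
    eapply Rle_trans; [apply Rle_abs|]. rewrite Rabs_mult.
    apply Rle_trans with
      (Rabs (v (S r)) * (col_norm p (S (wd i)) (W (S i)) r * sup_relu_readout i e)); [|right; ring].
    apply Rmult_le_compat_l; [apply Rabs_pos|apply Rabs_corr_hidden_le; auto]. }
  assert (B3 : rsum D (fun r => Rabs (v (S r)) * col_norm p (S (wd i)) (W (S i)) r) <=
               c * rpow (INR (dh (S i))) beta).
  { unfold D, beta. rewrite <- (wd_dh (S i)) by lia. apply holder_width_bound; auto.
    - apply wd_ge1.
    - intros; apply col_norm_nonneg.
    - apply lq_bounded_of_mat_norm; auto.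
      assert (H := HW (S i) ltac:(lia)). simpl in H. rewrite Nat.sub_0_r in H. auto. }
  assert (rsum D (fun r => Rabs (v (S r)) * col_norm p (S (wd i)) (W (S i)) r) * sup_relu_readout i e <=
          c * rpow (INR (dh (S i))) beta * sup_relu_readout i e) by (apply Rmult_le_compat_r; auto).
  lra.
Qed.

Lemma sup_readout_0_le e : is_sign e ->
  sup_readout 0 e <= Rabs (rsum n (fun s => e s)) + input_sup p m1 n x e.
Proof.
  intros He. apply sup_over_lub; [apply readouts_nonempty|].
  intros [W v] [HW Hv]. cbn [fst snd] in *. unfold readout, aff. cbn [fst snd]. simpl hidden.
  change (wd 0) with m1 in *.
  rewrite (rsum_ext n _ (fun s => v 0%nat * e s + e s * rsum m1 (fun t => v (S t) * x s t)))
    by (intros; ring).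
  rewrite rsum_plus, rsum_scal. destruct (lp_unit_split p m1 v Hv) as [Hv0 Hv1].
  assert (v 0%nat * rsum n (fun s => e s) <= Rabs (rsum n (fun s => e s))).
  { eapply Rle_trans; [apply Rle_abs|]. rewrite Rabs_mult.
    assert (Rabs (v 0%nat) <= 1) by (apply (Rabs_le1_of_rpow p); auto).
    assert (0 <= Rabs (rsum n (fun s => e s))) by apply Rabs_pos.
    assert (0 <= Rabs (v 0%nat)) by apply Rabs_pos. nra. }
  assert (input_corr m1 n x e (fun t => v (S t)) <= input_sup p m1 n x e).
  { apply sup_over_ub; auto. apply input_corr_bounded; auto. }
  unfold input_corr in *. change (rsum n e) with (rsum n (fun s => e s)). lra.
Qed.

(* The output layer, of l_{p,q} norm at most co, is co times a unit readout of layer k. *)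
Lemma corr_net_le co f e : 0 < co -> in_NN p q c co k m1 dh f -> is_sign e ->
  rsum n (fun s => e s * f (x s)) <= co * sup_readout k e.
Proof.
  intros Hco [W [HW [Hout Hf]]] He.
  set (N0 := col_norm p (S (wd k)) (W (S k)) 0).
  assert (HN0 : N0 <= co).
  { eapply Rle_trans; [|apply Hout]. unfold mat_norm. fold (wd k).
    destruct q as [q'|]; simpl in hq |- *.
    - rewrite Rplus_0_l. fold N0. rewrite rpow_rpow_inv; [lra|apply col_norm_nonneg|lra].
    - fold N0. apply Rmax_r. }
  set (v := fun r => W (S k) r 0%nat / co).
  assert (Cv : readouts k (W, v)) by (split; [exact HW|apply lp_unit_of_col_norm; auto]).
  assert (E : rsum n (fun s => e s * f (x s)) = co * rsum n (fun s => e s * readout k (W, v) (x s))).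
  { rewrite <- rsum_scal. apply rsum_ext. intros s _. rewrite Hf. unfold net_out, readout. cbn [fst snd].
    rewrite affine_aff, (aff_ext _ _ (fun r => co * v r)) by (unfold v; intros; field; lra).
    rewrite aff_scal. fold (wd k). ring. }
  rewrite E. apply Rmult_le_compat_l; [lra|].
  apply (sup_over_ub (readouts k) (fun th => rsum n (fun s => e s * readout k th (x s))) (W, v)); auto.
  apply corr_readout_bounded; auto.
Qed.

Definition layer_gain (i : nat) : R := c * rpow (INR (dh i)) beta.

Fixpoint peel_scale (i : nat) : R :=
  match i with O => 1 + m1_scale p m1 | S i' => 1 + layer_gain (S i') * peel_scale i' end.

Fixpoint peel_center (i : nat) : R :=
  match i with O => Erad n (input_sup p m1 n x) | S i' => layer_gain (S i') * peel_center i' end.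

Lemma layer_gain_nonneg i : 0 <= layer_gain i.
Proof. apply Rmult_le_pos; [lra|apply rpow_nonneg]. Qed.

Lemma peel_scale_ge1 i : 1 <= peel_scale i.
Proof.
  induction i; simpl; [assert (H := m1_scale_pos p m1 hm1); lra|].
  assert (0 <= layer_gain (S i)) by apply layer_gain_nonneg. nra.
Qed.

Lemma Erad_exp_sup_relu_readout_le i mu a : 0 < mu ->
  Erad n (fun e => exp (mu * (sup_relu_readout i e - a))) <=
  2 * Erad n (fun e => exp (mu * (sup_readout i e - a))).
Proof.
  intros Hmu.
  assert (E : forall F, Erad n (fun e => exp (mu * (F e - a))) =
                        exp (- (mu * a)) * Erad n (fun e => exp (mu * F e)))
    by (intros; rewrite <- Erad_scal; apply Erad_ext; intros; rewrite <- exp_plus; f_equal; ring).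
  rewrite !E. assert (0 < exp (- (mu * a))) by apply exp_pos.
  assert (C := Erad_exp_sup_abs_relu_le mu (readouts i) (fun th s => readout i th (x s)) n
                 (readout_bound i) Hmu (readouts_nonempty i)
                 (fun th Cth s Hs => Rabs_readout_le i th s Cth Hs)).
  unfold sup_relu_readout, sup_readout. nra.
Qed.

Lemma inv_le1 P : 1 <= P -> 0 <= 1 / P <= 1.
Proof. intros HP. assert (H := inv_ge1_bounds P HP). lra. Qed.

(* mu (|sum eps| + Z - E Z) is the convex combination, with weight 1/P, of mu P |sum eps|
   and mu P / m1_scale (Z - E Z). *)
Lemma peel_mgf_0 mu : 0 < mu ->
  Erad n (fun e => exp (mu * (sup_readout 0 e - peel_center 0))) <=
  2 * exp (mu * mu * (peel_scale 0 * peel_scale 0) * INR n / 2).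
Proof.
  intros Hmu. simpl peel_scale. simpl peel_center.
  assert (Hm := m1_scale_pos p m1 hm1). set (m := m1_scale p m1) in *.
  set (P := 1 + m). set (Z := input_sup p m1 n x).
  assert (HE : exp (mu * P * (mu * P) * INR n / 2) = exp (mu * mu * (P * P) * INR n / 2))
    by (f_equal; field).
  eapply Rle_trans; [apply (Erad_exp_mix_le n (1 / P) _
    (fun e => mu * P * Rabs (rsum n (fun s => e s))) (fun e => mu * P / m * (Z e - Erad n Z)))|].
  - apply inv_le1. unfold P; lra.
  - intros e He. assert (H := sup_readout_0_le e He).
    replace (1 / P * (mu * P * Rabs (rsum n (fun s => e s))) + (1 - 1 / P) * (mu * P / m * (Z e - Erad n Z)))
      with (mu * (Rabs (rsum n (fun s => e s)) + (Z e - Erad n Z))) by (unfold P; field; lra).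
    apply Rmult_le_compat_l; unfold Z; lra.
  - assert (H1 := Erad_exp_abs_sum_le n (mu * P)).
    assert (H2 := Erad_exp_bounded_diff n Z (2 * m) (mu * P / m) ltac:(lra)
                    (input_sup_bounded_diff p m1 n x hp hm1 hx)).
    replace (mu * P / m * (mu * P / m) * INR n * (2 * m * (2 * m)) / 8)
      with (mu * P * (mu * P) * INR n / 2) in H2 by (field; lra).
    rewrite HE in H1, H2. assert (0 < exp (mu * mu * (P * P) * INR n / 2)) by apply exp_pos.
    assert (Hth := inv_le1 P ltac:(unfold P; lra)). nra.
Qed.

(* Here the weight is 1/P with P = 1 + gain * peel_scale i, and the ReLU is removed at the
   rescaled parameter mu P / peel_scale i. *)
Lemma peel_mgf_S i : (S i <= k)%nat ->
  (forall mu, 0 < mu -> Erad n (fun e => exp (mu * (sup_readout i e - peel_center i))) <=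
     2 ^ (S i) * exp (mu * mu * (peel_scale i * peel_scale i) * INR n / 2)) ->
  forall mu, 0 < mu ->
  Erad n (fun e => exp (mu * (sup_readout (S i) e - peel_center (S i)))) <=
  2 ^ (S (S i)) * exp (mu * mu * (peel_scale (S i) * peel_scale (S i)) * INR n / 2).
Proof.
  intros Hi IH mu Hmu. simpl peel_scale. simpl peel_center.
  set (a := layer_gain (S i)). set (Q := peel_scale i). set (P := 1 + a * Q).
  assert (HQ : 1 <= Q) by apply peel_scale_ge1. assert (Ha : 0 <= a) by apply layer_gain_nonneg.
  assert (HP : 1 <= P) by (unfold P; nra).
  set (mu' := mu * P / Q). assert (Hmu' : 0 < mu') by (unfold mu'; apply Rdiv_lt_0_compat; nra).
  set (X := exp (mu * mu * (P * P) * INR n / 2)). assert (0 < X) by apply exp_pos.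
  assert (H1 : Erad n (fun e => exp (mu * P * Rabs (rsum n (fun s => e s)))) <= 2 * X).
  { unfold X. replace (mu * mu * (P * P) * INR n / 2) with (mu * P * (mu * P) * INR n / 2) by field.
    apply Erad_exp_abs_sum_le. }
  assert (H2 : Erad n (fun e => exp (mu' * (sup_relu_readout i e - peel_center i))) <= 2 ^ S (S i) * X).
  { eapply Rle_trans; [apply Erad_exp_sup_relu_readout_le; auto|].
    assert (IHi := IH mu' Hmu'). fold Q in IHi.
    replace (mu' * mu' * (Q * Q) * INR n / 2) with (mu * mu * (P * P) * INR n / 2) in IHi
      by (unfold mu'; field; lra).
    change (2 ^ S (S i)) with (2 * 2 ^ S i). fold X in IHi. lra. }
  eapply Rle_trans; [apply (Erad_exp_mix_le n (1 / P) _
    (fun e => mu * P * Rabs (rsum n (fun s => e s)))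
    (fun e => mu' * (sup_relu_readout i e - peel_center i)))|].
  - apply inv_le1; auto.
  - intros e He. assert (Hs := sup_readout_S_le i e He Hi). fold (layer_gain (S i)) a in Hs.
    replace (1 / P * (mu * P * Rabs (rsum n (fun s => e s))) +
             (1 - 1 / P) * (mu' * (sup_relu_readout i e - peel_center i)))
      with (mu * (Rabs (rsum n (fun s => e s)) + a * (sup_relu_readout i e - peel_center i)))
      by (unfold mu', P; field; split; nra).
    apply Rmult_le_compat_l; lra.
  - assert (Hth := inv_le1 P HP). assert (2 <= 2 ^ S (S i)) by (clear; induction i; simpl in *; lra).
    fold X. assert (Erad n (fun e => exp (mu * P * Rabs (rsum n (fun s => e s)))) <= 2 ^ S (S i) * X)
      by nra.
    nra.
Qed.

Lemma peel_mgf i : (i <= k)%nat -> forall mu, 0 < mu ->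
  Erad n (fun e => exp (mu * (sup_readout i e - peel_center i))) <=
  2 ^ (S i) * exp (mu * mu * (peel_scale i * peel_scale i) * INR n / 2).
Proof.
  induction i; intros Hi.
  - intros mu Hmu. rewrite pow_1. apply peel_mgf_0; auto.
  - apply peel_mgf_S; auto. apply IHi. lia.
Qed.

(* [peel_mgf] at i = k, optimised at mu = sqrt(2 (k+1) ln 2) / (peel_scale k sqrt n) *)
Lemma Erad_sup_readout_le : (1 <= n)%nat ->
  Erad n (sup_readout k) <=
  peel_center k + sqrt (2 * INR (S k) * ln 2) * peel_scale k * sqrt (INR n).
Proof.
  intros Hn. assert (HN : 0 < INR n) by (apply lt_0_INR; lia).
  assert (Hln : 0 < ln 2) by (rewrite <- ln_1; apply ln_increasing; lra).
  assert (HK : 0 < INR (S k)) by (apply lt_0_INR; lia).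
  set (nu := sqrt (2 * INR (S k) * ln 2)). assert (Hnu : 0 < nu) by (apply sqrt_lt_R0; nra).
  assert (Hnu2 : nu * nu = 2 * INR (S k) * ln 2) by (apply sqrt_sqrt; nra).
  set (sn := sqrt (INR n)). assert (Hsn : 0 < sn) by (apply sqrt_lt_R0; lra).
  assert (Hsn2 : sn * sn = INR n) by (apply sqrt_sqrt; lra).
  set (P := peel_scale k). assert (HP : 1 <= P) by apply peel_scale_ge1.
  set (mu := nu / (P * sn)). assert (Hmu : 0 < mu) by (unfold mu; apply Rdiv_lt_0_compat; nra).
  assert (H := Erad_le_of_exp n _ mu _ Hmu (peel_mgf k (Nat.le_refl k) mu Hmu)).
  fold P in H.
  rewrite (Erad_ext n _ (fun e => sup_readout k e + - peel_center k)), Erad_plus, Erad_const in H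
    by (intros; ring).
  rewrite ln_mult, ln_exp, <- Rpower_pow, ln_Rpower in H by (try apply exp_pos; try apply pow_lt; lra).
  replace ((INR (S k) * ln 2 + mu * mu * (P * P) * INR n / 2) / mu) with (nu * P * sn) in H.
  - change (Erad n (fun e => sup_readout k e)) with (Erad n (sup_readout k)) in H. lra.
  - rewrite <- Hsn2. unfold mu. replace (INR (S k) * ln 2) with (nu * nu / 2) by lra. field. nra.
Qed.

End Network.

Definition tail_sum (c : R) (D : nat -> R) (i : nat) : R :=
  rsum (S i) (fun j => c ^ (i - j) * rprod (i - j) (fun t => D (S j + t)%nat)).

Definition head_prod (c : R) (D : nat -> R) (i : nat) : R := c ^ i * rprod i (fun t => D (S t)).

Lemma tail_sum_S c D i : tail_sum c D (S i) = 1 + c * D (S i) * tail_sum c D i.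
Proof.
  unfold tail_sum. change (rsum (S (S i)) ?f) with (rsum (S i) f + f (S i)). cbv beta.
  rewrite Nat.sub_diag, <- rsum_scal, Rplus_comm. simpl (c ^ 0). simpl (rprod 0 _).
  f_equal; [ring|]. apply rsum_ext. intros j Hj.
  replace (S i - j)%nat with (S (i - j)) by lia. simpl pow. simpl rprod.
  replace (j + (i - j))%nat with i by lia. ring.
Qed.

Lemma head_prod_S c D i : head_prod c D (S i) = c * D (S i) * head_prod c D i.
Proof. unfold head_prod. simpl. ring. Qed.

Lemma tail_sum_nonneg c D i : 0 <= c -> (forall t, 0 <= D t) -> 0 <= tail_sum c D i.
Proof.
  intros Hc HD. apply rsum_nonneg. intros.
  apply Rmult_le_pos; [apply pow_le; auto|apply rprod_nonneg; auto].
Qed.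

Lemma head_prod_nonneg c D i : 0 <= c -> (forall t, 0 <= D t) -> 0 <= head_prod c D i.
Proof. intros Hc HD. apply Rmult_le_pos; [apply pow_le; auto|apply rprod_nonneg; auto]. Qed.

Lemma peel_scale_eq p q m1 dh c i :
  let D := fun t => rpow (INR (dh t)) (beta p q) in
  peel_scale p q m1 dh c i = tail_sum c D i + head_prod c D i * m1_scale p m1.
Proof.
  intros D. induction i; [unfold tail_sum, head_prod; simpl; ring|].
  simpl peel_scale. rewrite IHi, tail_sum_S, head_prod_S. unfold layer_gain, D. ring.
Qed.

Lemma peel_center_eq p q m1 dh c n x i :
  let D := fun t => rpow (INR (dh t)) (beta p q) in
  peel_center p q m1 dh c n x i = head_prod c D i * Erad n (input_sup p m1 n x).
Proof.
  intros D. induction i; [unfold head_prod; simpl; ring|].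
  simpl peel_center. rewrite IHi, head_prod_S. unfold layer_gain, D. ring.
Qed.

Lemma sqrt_ln16_gap k :
  sqrt 2 - 1 <= sqrt (INR (S k) * ln 16) - sqrt (2 * INR (S k) * ln 2).
Proof.
  assert (HK : 1 <= INR (S k)) by (apply (le_INR 1); lia).
  assert (Hln2 : / 2 < ln 2) by apply ln_lt_2.
  set (nu := sqrt (2 * INR (S k) * ln 2)).
  assert (Hnu2 : nu * nu = 2 * INR (S k) * ln 2) by (apply sqrt_sqrt; nra).
  assert (Hnu1 : 1 <= nu).
  { apply Rsqr_incr_0_var; [unfold Rsqr; rewrite Hnu2; nra|apply sqrt_pos]. }
  replace (sqrt (INR (S k) * ln 16)) with (sqrt 2 * nu).
  - assert (1 < sqrt 2) by (rewrite <- sqrt_1; apply sqrt_lt_1_alt; lra). nra.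
  - unfold nu. rewrite <- sqrt_mult_alt by lra. f_equal.
    replace 16 with (2 ^ 4) by (simpl; lra). rewrite ln_pow by lra. simpl INR. ring.
Qed.

Section Bound.

Variables (p : R) (q : extR) (k m1 : nat) (dh : nat -> nat) (c co : R) (n : nat) (x : nat -> nat -> R).
Hypothesis hp : 1 <= p.
Hypothesis hq : ext_ge1 q.
Hypothesis hm1 : (1 <= m1)%nat.
Hypothesis hdh : forall i, (1 <= i <= k)%nat -> (1 <= dh i)%nat.
Hypothesis hc : 0 < c.
Hypothesis hco : 0 < co.
Hypothesis hn : (1 <= n)%nat.
Hypothesis hx : forall i t, (i < n)%nat -> (t < m1)%nat -> -1 <= x i t <= 1.

Lemma emp_rademacher_le_Erad :
  emp_rademacher (in_NN p q c co k m1 dh) n x <= / INR n * co * Erad n (sup_readout p q k m1 dh c n x k).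
Proof.
  assert (HN : 0 < INR n) by (apply lt_0_INR; lia).
  unfold emp_rademacher. fold (Erad n (fun eps => Rsup (fun r => exists f, in_NN p q c co k m1 dh f /\
    r = / INR n * rsum n (fun i => eps i * f (x i))))).
  rewrite Rmult_assoc, <- !Erad_scal. apply Erad_mono. intros e He.
  assert (H0 := sup_readout_nonneg p q k m1 dh c n x hp hq hm1 hdh hc hx k e He).
  apply Rsup_le.
  - intros r [f [Hf ->]]. apply Rmult_le_compat_l; [left; apply Rinv_0_lt_compat; auto|].
    apply corr_net_le; auto.
  - apply Rmult_le_pos; [left; apply Rinv_0_lt_compat; auto|nra].
Qed.

Lemma emp_rademacher_le_of_input K : 0 <= K ->
  let L := sqrt (INR (S k) * ln 16) in
  let D := fun t => rpow (INR (dh t)) (beta p q) in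
  Erad n (input_sup p m1 n x) <=
    m1_scale p m1 * sqrt (INR n) * (K + (L - sqrt (2 * INR (S k) * ln 2))) ->
  emp_rademacher (in_NN p q c co k m1 dh) n x <=
    co * (L / sqrt (INR n)) * tail_sum c D k +
    co * c ^ k / sqrt (INR n) * rprod k (fun t => D (S t)) * m1_scale p m1 * (K + L).
Proof.
  intros HK L D HZ.
  assert (HN : 0 < INR n) by (apply lt_0_INR; lia).
  set (sn := sqrt (INR n)). assert (Hsn : 0 < sn) by (apply sqrt_lt_R0; lra).
  assert (Hsn2 : sn * sn = INR n) by (apply sqrt_sqrt; lra).
  assert (HD : forall t, 0 <= D t) by (intros; apply rpow_nonneg).
  set (a := head_prod c D k). set (b := tail_sum c D k). set (m := m1_scale p m1).
  assert (Ha : 0 <= a) by (apply head_prod_nonneg; auto; lra).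
  assert (Hb : 0 <= b) by (apply tail_sum_nonneg; auto; lra).
  assert (Hm : 0 < m) by (apply m1_scale_pos; auto).
  set (nu := sqrt (2 * INR (S k) * ln 2)) in HZ. assert (Hgap := sqrt_ln16_gap k). fold L nu in Hgap.
  assert (Hs2 : 1 < sqrt 2) by (rewrite <- sqrt_1; apply sqrt_lt_1_alt; lra).
  assert (HM := Erad_sup_readout_le p q k m1 dh c n x hp hq hm1 hdh hc hx hn).
  rewrite peel_scale_eq, peel_center_eq in HM. fold D a b m nu sn in HM. fold sn in HZ.
  assert (HE : Erad n (sup_readout p q k m1 dh c n x k) <= sn * (L * b + a * m * (K + L))).
  { assert (a * Erad n (input_sup p m1 n x) <= a * (m * sn * (K + (L - nu)))) by (apply Rmult_le_compat_l; auto).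
    assert (nu * b <= L * b) by (apply Rmult_le_compat_r; lra).
    assert (0 <= a * m) by nra. nra. }
  eapply Rle_trans; [apply emp_rademacher_le_Erad|]. rewrite <- Hsn2.
  apply Rle_trans with (co / sn * (sn * (L * b + a * m * (K + L))) / sn).
  - replace (/ (sn * sn) * co * Erad n (sup_readout p q k m1 dh c n x k))
      with (co / sn * Erad n (sup_readout p q k m1 dh c n x k) / sn) by (field; lra).
    unfold Rdiv. apply Rmult_le_compat_r; [left; apply Rinv_0_lt_compat; auto|].
    apply Rmult_le_compat_l; [apply Rmult_le_pos; [lra|left; apply Rinv_0_lt_compat; auto]|auto].
  - right. unfold a, head_prod. field. lra.
Qed.

End Bound.

Theorem proposition2
  (p : R) (q : extR) (k m1 : nat) (dh : nat -> nat) (c co : R)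
  (hp : 1 <= p)
  (hq : match q with Some q' => 1 <= q' | None => True end)
  (hm1 : (1 <= m1)%nat)
  (hdh : forall i, (1 <= i <= k)%nat -> (1 <= dh i)%nat)
  (hc : 0 < c) (hco : 0 < co)
  (n : nat) (hn : (1 <= n)%nat) (x : nat -> nat -> R)
  (hx : forall i t, (i < n)%nat -> (t < m1)%nat -> -1 <= x i t <= 1)
  (hdist : forall i j, (i < n)%nat -> (j < n)%nat -> i <> j ->
           exists t, (t < m1)%nat /\ x i t <> x j t) :
  let beta := pos_part (inv_pstar p - inv_ext q) in
  let L := sqrt (INR (S k) * ln 16) in
  let first := co * (L / sqrt (INR n)) *
      rsum (S k) (fun j => let i := S j in
         c ^ (S k - i) * rprod (S k - i) (fun t => rpow (INR (dh (i + t)%nat)) beta)) in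
  let pref := co * c ^ k / sqrt (INR n) *
      rprod k (fun t => rpow (INR (dh (S t))) beta) *
      rpow (INR m1) (inv_pstar p) in
  let R := emp_rademacher (in_NN p q c co k m1 dh) n x in
  (1 < p <= 2 ->
     R <= first + pref *
       (Rmin (sqrt (pstar p - 1)) (sqrt (2 * ln (2 * INR m1))) + L)) /\
  (p = 1 \/ 2 < p ->
     R <= first + pref * (sqrt (2 * ln (2 * INR m1)) + L)).
Proof.
  intros beta0 L first pref R.
  (* The bound holds for every sample. *)
  assert (Hgap := sqrt_ln16_gap k).
  assert (Hsn : 0 < sqrt (INR n)) by (apply sqrt_lt_R0, lt_0_INR; lia).
  assert (Hm := m1_scale_pos p m1 hm1).
  assert (Hb : R <= first + pref * (sqrt (2 * ln (2 * INR m1)) + L)).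
  { apply emp_rademacher_le_of_input; auto; [apply sqrt_pos|].
    eapply Rle_trans; [apply Erad_input_sup_le_massart; auto|].
    replace (sqrt (2 * INR n * ln (2 * INR m1))) with (sqrt (INR n) * sqrt (2 * ln (2 * INR m1)))
      by (rewrite <- sqrt_mult_alt by apply pos_INR; f_equal; ring).
    rewrite <- Rmult_assoc. apply Rmult_le_compat_l; [nra|].
    assert (1 < sqrt 2) by (rewrite <- sqrt_1; apply sqrt_lt_1_alt; lra). lra. }
  split; [|intros _; exact Hb].
  intros Hp12. unfold Rmin. destruct (Rle_dec _ _); [|exact Hb].
  apply emp_rademacher_le_of_input; auto; [apply sqrt_pos|].
  eapply Rle_trans; [apply Erad_input_sup_le_moment; auto|].
  apply Rmult_le_compat_l; [nra|lra].
Qed.
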